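(* Let $0<\beta\le1$ and let $f(z)=z+\sum_{n\ge2}a_nz^n\in\mathcal S^*_{\Sigma,\beta}$. Then $|a_3-a_2^2|\le\beta$.
   Context: Let $\mathbb U=\{z\in\mathbb C:|z|<1\}$; $\Sigma$ is the class of $f(z)=z+\sum_{n\ge2}a_nz^n$ analytic and univalent in $\mathbb U$ whose inverse extends to an analytic univalent function $g=f^{-1}$ on $\mathbb U$. $F\prec G$ means $F=G\circ w$ for some analytic $w:\mathbb U\to\mathbb U$ with $w(0)=0$. $\mathcal S^*_{\Sigma,\beta}$ (strongly bi-starlike of order $\beta$) is the set of $f\in\Sigma$ with $\frac{zf'(z)}{f(z)}\prec\big(\frac{1+z}{1-z}\big)^\beta$ and $\frac{wg'(w)}{g(w)}\prec\big(\frac{1+w}{1-w}\big)^\beta$ (principal power). *)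

From Stdlib Require Import Reals Lra.
Open Scope R_scope.

Definition Cplx : Type := (R * R)%type.
Definition C0 : Cplx := (0, 0).
Definition C1 : Cplx := (1, 0).
Definition Cadd (u v : Cplx) : Cplx := (fst u + fst v, snd u + snd v).
Definition Copp (u : Cplx) : Cplx := (- fst u, - snd u).
Definition Csub (u v : Cplx) : Cplx := Cadd u (Copp v).
Definition Cmul (u v : Cplx) : Cplx :=
  (fst u * fst v - snd u * snd v, fst u * snd v + snd u * fst v).
Definition Cinv (u : Cplx) : Cplx :=
  (fst u / (fst u ^ 2 + snd u ^ 2), - snd u / (fst u ^ 2 + snd u ^ 2)).
Definition Cdiv (u v : Cplx) : Cplx := Cmul u (Cinv v).
Definition Cnorm (u : Cplx) : R := sqrt (fst u ^ 2 + snd u ^ 2).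
Fixpoint Cpow (u : Cplx) (n : nat) : Cplx :=
  match n with O => C1 | S m => Cmul u (Cpow u m) end.
Definition Cexp (u : Cplx) : Cplx := (exp (fst u) * cos (snd u), exp (fst u) * sin (snd u)).

(* principal argument, in (-PI, PI] *)
Definition Arg (u : Cplx) : R :=
  let x := fst u in let y := snd u in
  if Rlt_dec 0 x then atan (y / x)
  else if Rlt_dec x 0 then
    (if Rle_dec 0 y then atan (y / x) + PI else atan (y / x) - PI)
  else if Rlt_dec 0 y then PI / 2
  else if Rlt_dec y 0 then - (PI / 2) else 0.

(* principal power u^b = exp (b * Log u), Log the principal logarithm (u <> 0) *)
Definition Cpowr (u : Cplx) (b : R) : Cplx :=
  Cexp (b * ln (Cnorm u), b * Arg u).

Definition inU (z : Cplx) : Prop := Cnorm z < 1.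

Fixpoint psum (c : nat -> Cplx) (z : Cplx) (n : nat) : Cplx :=
  match n with
  | O => Cmul (c O) (Cpow z O)
  | S m => Cadd (psum c z m) (Cmul (c (S m)) (Cpow z (S m)))
  end.

Definition ps_sum (c : nat -> Cplx) (z : Cplx) (s : Cplx) : Prop :=
  forall eps, 0 < eps -> exists N : nat, forall n, (N <= n)%nat ->
    Cnorm (Csub (psum c z n) s) < eps.

Definition analytic_U (h : Cplx -> Cplx) : Prop :=
  exists c : nat -> Cplx, forall z, inU z -> ps_sum c z (h z).

Definition univalent_U (h : Cplx -> Cplx) : Prop :=
  forall z1 z2, inU z1 -> inU z2 -> h z1 = h z2 -> z1 = z2.

Definition has_cderiv (h : Cplx -> Cplx) (z d : Cplx) : Prop :=
  forall eps, 0 < eps -> exists delta, 0 < delta /\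
    forall k, k <> C0 -> Cnorm k < delta ->
      Cnorm (Csub (Cdiv (Csub (h (Cadd z k)) (h z)) k) d) < eps.

Definition subordinate (F G : Cplx -> Cplx) : Prop :=
  exists w : Cplx -> Cplx, analytic_U w /\ w C0 = C0 /\
    (forall z, inU z -> inU (w z)) /\
    (forall z, inU z -> F z = G (w z)).

Definition strong_fun (beta : R) (z : Cplx) : Cplx :=
  Cpowr (Cdiv (Cadd C1 z) (Csub C1 z)) beta.

(* z h'(z)/h(z), with its removable singularity at 0 filled by the value 1 *)
Definition starlike_quot (h hd : Cplx -> Cplx) (z : Cplx) : Cplx :=
  if Req_EM_T (fst z) 0 then
    (if Req_EM_T (snd z) 0 then C1 else Cdiv (Cmul z (hd z)) (h z))
  else Cdiv (Cmul z (hd z)) (h z).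

Definition strongly_starlike_cond (beta : R) (h : Cplx -> Cplx) : Prop :=
  exists hd : Cplx -> Cplx, (forall z, inU z -> has_cderiv h z (hd z)) /\
    subordinate (starlike_quot h hd) (strong_fun beta).

(* f in S*_{Sigma,beta}, with f(z) = sum a_n z^n on U, a_0 = 0, a_1 = 1;
   g = f^{-1} extends to an analytic univalent function on U (g is the
   inverse of f near 0). *)
Definition strongly_bistarlike (beta : R) (f : Cplx -> Cplx) (a : nat -> Cplx) : Prop :=
  a O = C0 /\ a 1%nat = C1 /\
  (forall z, inU z -> ps_sum a z (f z)) /\
  univalent_U f /\
  exists g : Cplx -> Cplx,
    analytic_U g /\ univalent_U g /\
    (exists r, 0 < r /\ forall w, Cnorm w < r -> inU (g w) /\ f (g w) = w) /\
    strongly_starlike_cond beta f /\ strongly_starlike_cond beta g.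

(* Both [z f'(z)/f(z)] and [w g'(w)/g(w)] are of the form [p(u(z))], where
   [p(z) = ((1+z)/(1-z))^beta = 1 + 2 beta z + 2 beta^2 z^2 + O(z^3)] and [u] is a Schwarz
   function (an analytic self-map of the disk fixing 0).  Comparing Taylor coefficients of
   order 1 and 2 gives, for [u = u1 z + u2 z^2 + ...],
     [a2 = 2 beta u1]  and  [2 a3 - a2^2 = 2 beta u2 + 2 beta^2 u1^2].
   The inverse series has [b2 = -a2] and [b3 = 2 a2^2 - a3], so the same relations for [g],
   with Schwarz function [v], force [v1 = -u1] and [4 (a3 - a2^2) = 2 beta (u2 - v2)].
   Averaging a Schwarz function over the [N]-th roots of unity on the circle of radius [r]
   yields the Cauchy estimate [|u2| <= 1], whence [|a3 - a2^2| <= beta].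
   All expansions are taken along the ray [z = t > 0], where coefficients are identified
   through [O(t^n)] estimates as [t -> 0+]. *)

From Stdlib Require Import Reals Lra Lia Psatz.
From Coquelicot Require Import Coquelicot.
From Pilot Require Import Defs.
Open Scope R_scope.

(** * Taylor remainders of real elementary functions *)

Lemma abs_le_pow_of_derive (F dF : R -> R) (rho K : R) (n : nat) :
  0 <= K ->
  (forall c, Rabs c <= rho -> is_derive F c (dF c)) ->
  (forall c, Rabs c <= rho -> Rabs (dF c) <= K * Rabs c ^ n) ->
  F 0 = 0 -> forall x, Rabs x <= rho -> Rabs (F x) <= K * Rabs x ^ S n.
Proof.
  intros HK Hd Hb H0 x Hx.
  destruct (MVT_cor4 F dF 0 rho) with (b := x) as [c [Hc1 Hc2]].
  - intros c Hc. apply Hd. rewrite Rminus_0_r in Hc. exact Hc.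
  - rewrite Rminus_0_r; exact Hx.
  - rewrite H0, !Rminus_0_r in Hc1. rewrite !Rminus_0_r in Hc2.
    rewrite Hc1, Rabs_mult.
    specialize (Hb c ltac:(lra)). simpl.
    assert (Rabs c ^ n <= Rabs x ^ n) by (apply pow_incr; split; [apply Rabs_pos|exact Hc2]).
    assert (0 <= Rabs x) by apply Rabs_pos.
    assert (0 <= Rabs c ^ n) by (apply pow_le, Rabs_pos).
    assert (K * Rabs c ^ n <= K * Rabs x ^ n) by (apply Rmult_le_compat_l; auto).
    nra.
Qed.

(* [f_remk] bounds the remainder of the degree-[k] Taylor polynomial of [f] at 0. *)

Lemma exp_rem0 x : Rabs x <= 1 -> Rabs (exp x - 1) <= 3 * Rabs x ^ 1.
Proof.
  intros Hx. apply (abs_le_pow_of_derive (fun x => exp x - 1) exp 1 3 0); try lra.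
  - intros c _. auto_derive; auto; ring.
  - intros c Hc. simpl. rewrite Rmult_1_r, Rabs_pos_eq by (left; apply exp_pos).
    apply Rabs_le_between in Hc.
    assert (exp c <= exp 1) by (destruct (Req_dec c 1); [subst; lra | left; apply exp_increasing; lra]).
    pose proof exp_le_3; lra.
  - rewrite exp_0; ring.
Qed.

Lemma exp_rem1 x : Rabs x <= 1 -> Rabs (exp x - 1 - x) <= 3 * Rabs x ^ 2.
Proof.
  intros Hx. apply (abs_le_pow_of_derive (fun x => exp x - 1 - x) (fun x => exp x - 1) 1 3 1); try lra.
  - intros c _. auto_derive; auto; ring.
  - intros c Hc. apply exp_rem0; auto.
  - rewrite exp_0; ring.
Qed.

Lemma exp_rem2 x : Rabs x <= 1 -> Rabs (exp x - 1 - x - x^2/2) <= 3 * Rabs x ^ 3.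
Proof.
  intros Hx. apply (abs_le_pow_of_derive (fun x => exp x - 1 - x - x^2/2) (fun x => exp x - 1 - x) 1 3 2); try lra.
  - intros c _. auto_derive; auto; field.
  - intros c Hc. apply exp_rem1; auto.
  - rewrite exp_0; field.
Qed.

Lemma sin_rem0 x : Rabs (sin x) <= 1 * Rabs x ^ 1.
Proof.
  apply (abs_le_pow_of_derive sin cos (Rabs x) 1 0); try lra.
  - intros c _. apply is_derive_sin.
  - intros c _. simpl. pose proof (COS_bound c). apply Rabs_le; lra.
  - apply sin_0.
Qed.

Lemma cos_rem1 x : Rabs (cos x - 1) <= 1 * Rabs x ^ 2.
Proof.
  apply (abs_le_pow_of_derive (fun x => cos x - 1) (fun x => - sin x) (Rabs x) 1 1); try lra.
  - intros c _. auto_derive; auto; ring.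
  - intros c _. rewrite Rabs_Ropp. apply sin_rem0.
  - rewrite cos_0; ring.
Qed.

Lemma sin_rem2 x : Rabs (sin x - x) <= 1 * Rabs x ^ 3.
Proof.
  apply (abs_le_pow_of_derive (fun x => sin x - x) (fun x => cos x - 1) (Rabs x) 1 2); try lra.
  - intros c _. auto_derive; auto; ring.
  - intros c _. apply cos_rem1.
  - rewrite sin_0; ring.
Qed.

Lemma cos_rem3 x : Rabs (cos x - 1 + x^2/2) <= 1 * Rabs x ^ 4.
Proof.
  apply (abs_le_pow_of_derive (fun x => cos x - 1 + x^2/2) (fun x => - (sin x - x)) (Rabs x) 1 3); try lra.
  - intros c _. auto_derive; auto; field.
  - intros c _. rewrite Rabs_Ropp. apply sin_rem2.
  - rewrite cos_0; field.
Qed.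

Lemma ln1p_rem2 x : Rabs x <= 1/2 -> Rabs (ln (1 + x) - x + x^2/2) <= 2 * Rabs x ^ 3.
Proof.
  intros Hx. apply (abs_le_pow_of_derive (fun x => ln (1 + x) - x + x^2/2) (fun x => x^2/(1+x)) (1/2) 2 2); try lra.
  - intros c Hc. apply Rabs_le_between in Hc. auto_derive. lra. field. lra.
  - intros c Hc. apply Rabs_le_between in Hc as Hc'.
    rewrite Rabs_div by lra. rewrite (Rabs_pos_eq (1+c)) by lra.
    rewrite <- RPow_abs. apply Rmult_le_reg_r with (1 + c). lra.
    unfold Rdiv. rewrite Rmult_assoc, Rinv_l by lra.
    assert (0 <= Rabs c ^ 2) by (apply pow_le, Rabs_pos). nra.
  - rewrite Rplus_0_r, ln_1; field.
Qed.

Lemma atan_rem2 x : Rabs (atan x - x) <= 1 * Rabs x ^ 3.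
Proof.
  apply (abs_le_pow_of_derive (fun x => atan x - x) (fun x => - x^2/(1+x^2)) (Rabs x) 1 2); try lra.
  - intros c _. auto_derive. auto. field. nra.
  - intros c _. assert (0 < 1 + c^2) by nra.
    rewrite Rabs_div by lra. rewrite (Rabs_pos_eq (1+c^2)) by lra.
    rewrite Rabs_Ropp, <- RPow_abs. apply Rmult_le_reg_r with (1 + c^2). lra.
    unfold Rdiv. rewrite Rmult_assoc, Rinv_l by lra.
    assert (0 <= Rabs c ^ 2) by (apply pow_le, Rabs_pos). nra.
  - rewrite atan_0; ring.
Qed.

(** * Second-order expansion of [((1+z)/(1-z))^beta] *)

Lemma Rabs_add_le x y a b : Rabs x <= a -> Rabs y <= b -> Rabs (x + y) <= a + b.
Proof. intros. eapply Rle_trans. apply Rabs_triang. lra. Qed.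
Lemma Rabs_sub_le x y a b : Rabs x <= a -> Rabs y <= b -> Rabs (x - y) <= a + b.
Proof. intros. eapply Rle_trans. apply Rabs_triang. rewrite Rabs_Ropp. lra. Qed.
Lemma Rabs_mul_le x y a b : Rabs x <= a -> Rabs y <= b -> Rabs (x * y) <= a * b.
Proof.
  intros. rewrite Rabs_mult. pose proof (Rabs_pos x); pose proof (Rabs_pos y).
  apply Rmult_le_compat; auto.
Qed.

Ltac bound_abs := first
  [ eassumption
  | eapply Rabs_add_le; [bound_abs|bound_abs]
  | eapply Rabs_sub_le; [bound_abs|bound_abs]
  | eapply Rabs_mul_le; [bound_abs|bound_abs]
  | rewrite Rabs_Ropp; bound_abs
  | apply Rle_refl ].

Lemma Cmod_le_abs_sum (z : C) : Cmod z <= Rabs (fst z) + Rabs (snd z).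
Proof.
  unfold Cmod. pose proof (Rabs_pos (fst z)); pose proof (Rabs_pos (snd z)).
  rewrite <- (sqrt_Rsqr (Rabs (fst z) + Rabs (snd z))) by lra.
  apply sqrt_le_1_alt. unfold Rsqr.
  rewrite <- (pow2_abs (fst z)), <- (pow2_abs (snd z)). nra.
Qed.
Lemma Rabs_fst_le_Cmod (z : C) : Rabs (fst z) <= Cmod z.
Proof. pose proof (Rmax_Cmod z). pose proof (Rmax_l (Rabs (fst z)) (Rabs (snd z))). lra. Qed.
Lemma Rabs_snd_le_Cmod (z : C) : Rabs (snd z) <= Cmod z.
Proof. pose proof (Rmax_Cmod z). pose proof (Rmax_r (Rabs (fst z)) (Rabs (snd z))). lra. Qed.
Lemma Cmod_pow2 (z : C) : Cmod z ^ 2 = fst z ^ 2 + snd z ^ 2.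
Proof. unfold Cmod. rewrite pow2_sqrt; auto. nra. Qed.

Lemma ln_sqrt x : 0 < x -> ln (sqrt x) = ln x / 2.
Proof.
  intros H. assert (Hs : 0 < sqrt x) by (apply sqrt_lt_R0; auto).
  rewrite <- (sqrt_sqrt x) at 2 by lra. rewrite ln_mult by auto. field.
Qed.

Lemma exp_cos_rem2 a b s : Rabs a <= s -> Rabs b <= s -> s <= 1/2 ->
  Rabs (exp a * cos b - (1 + a + (a^2 - b^2)/2)) <= 5 * s^3.
Proof.
  intros Ha Hb Hs.
  assert (H0 : 0 <= s) by (pose proof (Rabs_pos a); lra).
  pose proof (exp_rem2 a ltac:(lra)) as E3.
  pose proof (cos_rem3 b) as C4.
  assert (Hcb : Rabs (cos b) <= 1) by (apply Rabs_le; pose proof (COS_bound b); lra).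
  replace (exp a * cos b - (1 + a + (a^2 - b^2)/2)) with
    ((exp a - 1 - a - a^2/2) * cos b + (1 + a + a^2/2) * (cos b - 1 + b^2/2)
      - (a + a^2/2) * (b^2/2)) by field.
  assert (Ha3 : Rabs a ^ 3 <= s^3) by (apply pow_incr; split; [apply Rabs_pos|auto]).
  assert (Hb4 : Rabs b ^ 4 <= s^4) by (apply pow_incr; split; [apply Rabs_pos|auto]).
  assert (Hq : Rabs (1 + a + a^2/2) <= 2).
  { apply Rabs_le. apply Rabs_le_between in Ha. nra. }
  assert (Hr : Rabs ((a + a^2/2) * (b^2/2)) <= s^3).
  { rewrite Rabs_mult. assert (Rabs (a + a^2/2) <= 2 * s).
    { apply Rabs_le. apply Rabs_le_between in Ha. nra. }
    assert (Rabs (b^2/2) <= s^2/2).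
    { rewrite Rabs_pos_eq by nra. rewrite <- (pow2_abs b).
      pose proof (Rabs_pos b). nra. }
    pose proof (Rabs_pos (a + a^2/2)). pose proof (Rabs_pos (b^2/2)). nra. }
  eapply Rle_trans. bound_abs.
  assert (s^4 <= s^3/2) by (replace (s^4) with (s*s^3) by ring; assert (0 <= s^3) by (apply pow_le; lra); nra).
  lra.
Qed.

Lemma exp_sin_rem2 a b s : Rabs a <= s -> Rabs b <= s -> s <= 1/2 ->
  Rabs (exp a * sin b - (b + a * b)) <= 6 * s^3.
Proof.
  intros Ha Hb Hs.
  assert (H0 : 0 <= s) by (pose proof (Rabs_pos a); lra).
  pose proof (exp_rem1 a ltac:(lra)) as E2.
  pose proof (sin_rem2 b) as S3.
  assert (He : Rabs (exp a) <= 3).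
  { rewrite Rabs_pos_eq by (left; apply exp_pos).
    pose proof (exp_rem0 a ltac:(lra)) as H1. apply Rabs_le_between in H1.
    simpl in H1. lra. }
  replace (exp a * sin b - (b + a * b)) with
    ((exp a - 1 - a) * b + exp a * (sin b - b)) by ring.
  assert (Ha2 : Rabs a ^ 2 <= s^2) by (apply pow_incr; split; [apply Rabs_pos|auto]).
  assert (Hb3 : Rabs b ^ 3 <= s^3) by (apply pow_incr; split; [apply Rabs_pos|auto]).
  eapply Rle_trans. bound_abs.
  pose proof (Rabs_pos b). nra.
Qed.

Lemma Cexp_rem2 (u : C) s : Rabs (fst u) <= s -> Rabs (snd u) <= s -> s <= 1/2 ->
  Cmod (Defs.Cexp u - (1 + u + RtoC (1/2) * u ^ 2))%C <= 11 * s^3.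
Proof.
  destruct u as [a b]; simpl fst; simpl snd; intros Ha Hb Hs.
  replace (Defs.Cexp (a, b) - (1 + (a, b) + RtoC (1/2) * (a, b) ^ 2))%C with
    ((exp a * cos b - (1 + a + (a^2 - b^2)/2))%R, (exp a * sin b - (b + a * b))%R)
    by (apply injective_projections; simpl; field).
  eapply Rle_trans. apply Cmod_le_abs_sum. cbn [fst snd].
  pose proof (exp_cos_rem2 a b s Ha Hb Hs). pose proof (exp_sin_rem2 a b s Ha Hb Hs). lra.
Qed.

(* Goals stated with the [Cplx] operations of [Defs] must be retyped at Coquelicot's [C]
   before [ring] and [field] apply. *)
Ltac change_eq_C := match goal with |- @eq _ ?a ?b => change (@eq C a b) end.

Definition cayley (z : C) : C := Defs.Cdiv (Cadd C1 z) (Csub C1 z).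

Definition strong_fun_taylor2 (beta : R) (z : C) : C :=
  (1 + RtoC (2 * beta) * z + RtoC (2 * beta ^ 2) * z ^ 2)%C.

Lemma cayley_eq (z : C) : (1 - fst z)^2 + snd z^2 <> 0 ->
  cayley z = ((1 - fst z^2 - snd z^2) / ((1 - fst z)^2 + snd z^2),
              2 * snd z / ((1 - fst z)^2 + snd z^2)).
Proof.
  destruct z as [x y]; simpl; intros H.
  unfold cayley, Defs.Cdiv, Cmul, Defs.Cinv, Cadd, Csub, Copp, C1; simpl.
  apply injective_projections; simpl; field; contradict H; nra.
Qed.

Lemma Arg_pos (u : C) : 0 < fst u -> Arg u = atan (snd u / fst u).
Proof. intros H. unfold Arg. destruct (Rlt_dec 0 (fst u)); [reflexivity|lra]. Qed.

Lemma ln_Cnorm_cayley_rem (z : C) : Cmod z <= 1/8 ->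
  Rabs (ln (Cnorm (cayley z)) - 2 * fst z) <= 56 * Cmod z ^ 3.
Proof.
  intros Hz. pose proof (Rabs_fst_le_Cmod z) as Hx. pose proof (Cmod_pow2 z) as Hr2.
  set (r := Cmod z) in *. assert (Hr0 : 0 <= r) by apply Cmod_ge_0.
  rewrite (cayley_eq z) by (apply Rabs_le_between in Hx; nra).
  destruct z as [x y]; cbn [fst snd] in *.
  apply Rabs_le_between in Hx as Hx'.
  set (D := (1 - x)^2 + y^2). set (E := (1 + x)^2 + y^2).
  assert (HD : 0 < D) by (unfold D; nra).
  set (s1 := 2*x + r^2). set (s2 := -2*x + r^2).
  assert (HL : ln (Cnorm ((1 - x^2 - y^2) / D, 2 * y / D)) = (ln (1 + s1) - ln (1 + s2)) / 2).
  { unfold Cnorm. cbn [fst snd]. rewrite ln_sqrt by (apply Rplus_lt_le_0_compat;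
      [apply pow_lt, Rdiv_lt_0_compat; nra | apply pow2_ge_0]).
    replace (((1 - x^2 - y^2) / D)^2 + (2 * y / D)^2) with (E / D)
      by (unfold E, D; field; fold D; lra).
    rewrite ln_div by (unfold E, D in *; nra).
    replace E with (1 + s1) by (unfold E, s1; rewrite Hr2; ring).
    replace D with (1 + s2) by (unfold D, s2; rewrite Hr2; ring). reflexivity. }
  rewrite HL.
  assert (Hs1 : Rabs s1 <= 3 * r) by (unfold s1; apply Rabs_le; nra).
  assert (Hs2 : Rabs s2 <= 3 * r) by (unfold s2; apply Rabs_le; nra).
  pose proof (ln1p_rem2 s1 ltac:(lra)) as e1. pose proof (ln1p_rem2 s2 ltac:(lra)) as e2.
  assert (Rabs s1 ^ 3 <= (3*r)^3) by (apply pow_incr; split; [apply Rabs_pos|auto]).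
  assert (Rabs s2 ^ 3 <= (3*r)^3) by (apply pow_incr; split; [apply Rabs_pos|auto]).
  replace ((ln (1 + s1) - ln (1 + s2)) / 2 - 2 * x) with
    ((ln (1 + s1) - s1 + s1^2/2) / 2 - (ln (1 + s2) - s2 + s2^2/2)/2 + (- 2 * x * r^2))
    by (unfold s1, s2; field).
  assert (Rabs (- 2 * x * r^2) <= 2 * r^3) by (apply Rabs_le; split; nra).
  assert (Rabs ((ln (1 + s1) - s1 + s1^2/2) / 2) <= 27 * r^3).
  { unfold Rdiv. rewrite Rabs_mult, (Rabs_pos_eq (/2)) by lra. nra. }
  assert (Rabs ((ln (1 + s2) - s2 + s2^2/2) / 2) <= 27 * r^3).
  { unfold Rdiv. rewrite Rabs_mult, (Rabs_pos_eq (/2)) by lra. nra. }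
  eapply Rle_trans. bound_abs. lra.
Qed.

Lemma Arg_cayley_rem (z : C) : Cmod z <= 1/8 ->
  Rabs (Arg (cayley z) - 2 * snd z) <= 30 * Cmod z ^ 3.
Proof.
  intros Hz. pose proof (Rabs_fst_le_Cmod z) as Hx. pose proof (Rabs_snd_le_Cmod z) as Hy.
  pose proof (Cmod_pow2 z) as Hr2.
  set (r := Cmod z) in *. assert (Hr0 : 0 <= r) by apply Cmod_ge_0.
  rewrite (cayley_eq z) by (apply Rabs_le_between in Hx; nra).
  destruct z as [x y]; cbn [fst snd] in *.
  apply Rabs_le_between in Hx as Hx'. apply Rabs_le_between in Hy as Hy'.
  set (D := (1 - x)^2 + y^2).
  assert (HD : 0 < D) by (unfold D; nra).
  assert (Hr2s : r^2 <= 1/64) by nra.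
  set (s3 := 2 * y / (1 - r^2)).
  assert (HA : Arg ((1 - x^2 - y^2) / D, 2 * y / D) = atan s3).
  { rewrite Arg_pos by (cbn [fst]; apply Rdiv_lt_0_compat; nra).
    f_equal. cbn [fst snd]. unfold s3. rewrite Hr2. field. split; nra. }
  rewrite HA.
  assert (Hs3 : Rabs s3 <= 3 * r).
  { unfold s3. rewrite Rabs_div by nra. rewrite Rabs_mult, (Rabs_pos_eq 2) by lra.
    rewrite (Rabs_pos_eq (1 - r^2)) by nra. apply Rmult_le_reg_r with (1 - r^2). nra.
    unfold Rdiv. rewrite Rmult_assoc, Rinv_l by nra. nra. }
  replace (atan s3 - 2 * y) with ((atan s3 - s3) + (s3 - 2*y)) by ring.
  pose proof (atan_rem2 s3) as e3.
  assert (Rabs s3 ^ 3 <= (3*r)^3) by (apply pow_incr; split; [apply Rabs_pos|auto]).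
  assert (Rabs (s3 - 2*y) <= 3 * r^3).
  { unfold s3. replace (2 * y / (1 - r ^ 2) - 2 * y) with (2 * y * r^2 / (1 - r^2))
      by (field; nra).
    rewrite Rabs_div by nra. rewrite !Rabs_mult, (Rabs_pos_eq 2) by lra.
    rewrite (Rabs_pos_eq (1 - r^2)) by nra. rewrite (Rabs_pos_eq (r^2)) by nra.
    apply Rmult_le_reg_r with (1 - r^2). nra.
    unfold Rdiv. rewrite Rmult_assoc, Rinv_l by nra.
    assert (Rabs y * r^2 <= r * r^2) by (apply Rmult_le_compat_r; nra).
    assert (0 <= r^3) by (apply pow_le; lra).
    replace (r^3) with (r * r^2) in * by ring. nra. }
  eapply Rle_trans. bound_abs. nra.
Qed.

Lemma Cmod_RtoC_nonneg t : 0 <= t -> Cmod (RtoC t) = t.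
Proof. intros. rewrite Cmod_R. apply Rabs_pos_eq; auto. Qed.

Lemma RtoC_neq0 t : 0 < t -> RtoC t <> RtoC 0.
Proof. intros H E. apply (f_equal fst) in E. simpl in E. lra. Qed.

(* The principal logarithm of [cayley z], so that [strong_fun beta z = exp (beta * cayley_log z)]. *)
Definition cayley_log (z : C) : C := (ln (Cnorm (cayley z)), Arg (cayley z)).

Lemma cayley_log_rem1 (z : C) : Cmod z <= 1/8 ->
  Cmod (cayley_log z - RtoC 2 * z)%C <= 86 * Cmod z ^ 3.
Proof.
  intros Hz.
  replace (cayley_log z - RtoC 2 * z)%C with
    ((ln (Cnorm (cayley z)) - 2 * fst z)%R, (Arg (cayley z) - 2 * snd z)%R)
    by (apply injective_projections; simpl; ring).
  eapply Rle_trans; [apply Cmod_le_abs_sum|]. cbn [fst snd].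
  pose proof (ln_Cnorm_cayley_rem z Hz). pose proof (Arg_cayley_rem z Hz). lra.
Qed.

Lemma strong_fun_rem2 (beta : R) (z : C) : 0 < beta <= 1 -> Cmod z <= 1/8 ->
  Cmod (strong_fun beta z - strong_fun_taylor2 beta z)%C <= 1000 * Cmod z ^ 3.
Proof.
  intros Hb Hz. pose proof (cayley_log_rem1 z Hz) as HL.
  assert (H2z : Cmod (RtoC 2 * z)%C = 2 * Cmod z) by (rewrite Cmod_mult, Cmod_RtoC_nonneg; lra).
  assert (H4z : Cmod (RtoC 4 * z)%C = 4 * Cmod z) by (rewrite Cmod_mult, Cmod_RtoC_nonneg; lra).
  set (r := Cmod z) in *. assert (Hr0 : 0 <= r) by apply Cmod_ge_0.
  assert (Hr3 : r ^ 3 <= r / 64) by (replace (r ^ 3) with (r * r ^ 2) by ring; nra).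
  set (L := cayley_log z) in *.
  set (u := (RtoC beta * L)%C).
  assert (Hexp : strong_fun beta z = Defs.Cexp u).
  { unfold strong_fun, Cpowr. fold (cayley z). f_equal.
    apply injective_projections; simpl; ring. }
  assert (HL' : Cmod (L + RtoC 2 * z)%C <= 86 * r^3 + 4 * r).
  { replace (L + RtoC 2 * z)%C with ((L - RtoC 2 * z) + RtoC 4 * z)%C by ring.
    eapply Rle_trans; [apply Cmod_triangle|]. lra. }
  assert (Hu : Cmod u <= 4 * r).
  { unfold u. rewrite Cmod_mult, Cmod_RtoC_nonneg by lra.
    pose proof (Cmod_triangle (L - RtoC 2 * z) (RtoC 2 * z)).
    replace ((L - RtoC 2 * z) + RtoC 2 * z)%C with L in * by ring.
    assert (Cmod L <= 4 * r) by lra. pose proof (Cmod_ge_0 L). nra. }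
  pose proof (Cexp_rem2 u (4 * r) ltac:(pose proof (Rabs_fst_le_Cmod u); lra)
    ltac:(pose proof (Rabs_snd_le_Cmod u); lra) ltac:(lra)) as Hrem.
  replace (strong_fun beta z - strong_fun_taylor2 beta z)%C with
    ((Defs.Cexp u - (1 + u + RtoC (1/2) * u ^ 2)) + RtoC beta * (L - RtoC 2 * z)
     + RtoC (beta^2/2) * ((L - RtoC 2 * z) * (L + RtoC 2 * z)))%C
    by (rewrite Hexp; unfold u, strong_fun_taylor2; apply injective_projections; simpl; field).
  eapply Rle_trans. apply Cmod_triangle. eapply Rle_trans. apply Rplus_le_compat_r, Cmod_triangle.
  rewrite !Cmod_mult, !Cmod_RtoC_nonneg by nra.
  assert (0 <= Cmod (L - RtoC 2 * z)%C) by apply Cmod_ge_0.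
  assert (Cmod (L - RtoC 2 * z)%C * Cmod (L + RtoC 2 * z)%C <= 86 * r^3 * (86 * r^3 + 4 * r))
    by (apply Rmult_le_compat; auto; apply Cmod_ge_0).
  assert (86 * r^3 * (86 * r^3 + 4 * r) <= 60 * r^3).
  { assert (0 <= r^3) by (apply pow_le; lra).
    assert (86 * (86 * r^3 + 4 * r) <= 60) by lra. nra. }
  assert (beta^2/2 <= 1/2) by nra. assert (0 <= beta^2/2) by nra.
  assert (beta * Cmod (L - RtoC 2 * z)%C <= 86 * r^3) by nra.
  nra.
Qed.

(** * Estimates for power series on the unit disk *)

Lemma Cmod_sub_le (x y : C) : Cmod (x - y)%C <= Cmod x + Cmod y.
Proof. eapply Rle_trans. apply Cmod_triangle. rewrite Cmod_opp. lra. Qed.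
Lemma Cmod_sub_triangle (x y z : C) : Cmod (x - z)%C <= Cmod (x - y)%C + Cmod (y - z)%C.
Proof. replace (x - z)%C with ((x - y) + (y - z))%C by ring. apply Cmod_triangle. Qed.
Lemma Cmod_sub_sym (x y : C) : Cmod (x - y)%C = Cmod (y - x)%C.
Proof. replace (x - y)%C with (- (y - x))%C by ring. apply Cmod_opp. Qed.

(* [csum f n] sums [f 0, ..., f (n-1)], whereas [psum c z n] includes the index [n]. *)
Fixpoint csum (f : nat -> C) (n : nat) : C :=
  match n with O => RtoC 0 | S m => (csum f m + f m)%C end.

Lemma csum_ext f g n : (forall k, (k < n)%nat -> f k = g k) -> csum f n = csum g n.
Proof. induction n; intros H; simpl; auto. rewrite IHn, H; auto. Qed.

Lemma csum_add f g n : csum (fun k => f k + g k)%C n = (csum f n + csum g n)%C.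
Proof. induction n; simpl. ring. rewrite IHn. ring. Qed.

Lemma csum_sub f g n : (csum f n - csum g n)%C = csum (fun k => f k - g k)%C n.
Proof. induction n; simpl. ring. rewrite <- IHn. ring. Qed.

Lemma csum_mul_l a f n : (a * csum f n)%C = csum (fun k => a * f k)%C n.
Proof. induction n; simpl. ring. rewrite <- IHn. ring. Qed.

Lemma csum_exchange (F : nat -> nat -> C) n m :
  csum (fun k => csum (fun j => F k j) m) n = csum (fun j => csum (fun k => F k j) n) m.
Proof.
  induction n; simpl.
  - induction m; simpl; auto. rewrite <- IHm. ring.
  - rewrite IHn. rewrite <- csum_add. reflexivity.
Qed.

Lemma Cmod_csum_le f n B : (forall k, (k < n)%nat -> Cmod (f k) <= B) -> Cmod (csum f n) <= INR n * B.
Proof.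
  induction n; intros H; cbn [csum]. rewrite Cmod_0. simpl. lra.
  eapply Rle_trans. apply Cmod_triangle. rewrite S_INR.
  assert (Cmod (csum f n) <= INR n * B) by (apply IHn; intros; apply H; lia).
  specialize (H n ltac:(lia)). lra.
Qed.

Lemma csum_const a n : csum (fun _ => a) n = (INR n * a)%C.
Proof. induction n; simpl csum. simpl. ring. rewrite IHn, S_INR. rewrite RtoC_plus. ring. Qed.

Lemma csum_mul_r a f n : (csum f n * a)%C = csum (fun k => f k * a)%C n.
Proof. induction n; simpl. ring. rewrite <- IHn. ring. Qed.

Lemma csum_sub_le_geom (a : nat -> C) M q m e : 0 <= q < 1 ->
  (forall n, Cmod (a n) <= M * q ^ n) ->
  Cmod (csum a (m + e) - csum a m)%C <= M * q ^ m * (1 - q ^ e) / (1 - q).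
Proof.
  intros Hq Ha. induction e.
  - rewrite Nat.add_0_r. replace (csum a m - csum a m)%C with (RtoC 0) by ring.
    rewrite Cmod_0. right. simpl. field. lra.
  - rewrite Nat.add_succ_r. cbn [csum].
    replace (csum a (m + e) + a (m + e)%nat - csum a m)%C with
      ((csum a (m + e) - csum a m) + a (m + e)%nat)%C by ring.
    eapply Rle_trans; [apply Cmod_triangle|].
    eapply Rle_trans; [apply Rplus_le_compat; [exact IHe | apply Ha]|].
    right. rewrite pow_add. simpl. field. lra.
Qed.

Lemma sum_f_R0_ge_term (f : nat -> R) N n : (forall k, 0 <= f k) -> (n <= N)%nat -> f n <= sum_f_R0 f N.
Proof.
  intros Hf. induction N; intros Hn.
  - replace n with 0%nat by lia. simpl. lra.
  - destruct (Nat.eq_dec n (S N)).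
    + subst. simpl. pose proof (cond_pos_sum f N) as H.
      assert (0 <= sum_f_R0 f N).
      { clear -Hf. induction N; simpl; auto. specialize (Hf (S N)). lra. }
      lra.
    + simpl. specialize (IHN ltac:(lia)). specialize (Hf (S N)). lra.
Qed.

Lemma psum_S c z n : psum c z (S n) = (psum c z n + c (S n) * z ^ (S n))%C.
Proof. reflexivity. Qed.

Lemma psum_as_csum c z m : psum c z m = csum (fun n => c n * z ^ n)%C (S m).
Proof.
  induction m. simpl. change (c O * 1 = RtoC 0 + c O * 1)%C. ring.
  rewrite psum_S, IHm. reflexivity.
Qed.

Lemma psum_at0 c n : psum c (RtoC 0) n = c O.
Proof.
  induction n; simpl.
  - change (c O * RtoC 1 = c O)%C. ring.
  - rewrite IHn. change (c O + c (S n) * (RtoC 0 * Defs.Cpow (RtoC 0) n) = c O)%C. ring.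
Qed.



Lemma Cmod_lim_sub_le (u : nat -> C) (s : C) (v : C) (B : R) :
  (forall eps, 0 < eps -> exists N, forall n, (N <= n)%nat -> Cmod (u n - s)%C < eps) ->
  (forall N, exists n, (N <= n)%nat /\ Cmod (u n - v)%C <= B) -> Cmod (s - v)%C <= B.
Proof.
  intros Hu Hv. apply Rle_plus_epsilon. intros eps He.
  destruct (Hu eps He) as [N HN]. destruct (Hv N) as [n [Hn Hb]].
  specialize (HN n Hn). eapply Rle_trans. apply (Cmod_sub_triangle s (u n) v).
  rewrite Cmod_sub_sym. lra.
Qed.

Lemma ps_sum_at0 c s : ps_sum c (RtoC 0) s -> s = c O.
Proof.
  intros H. assert (H0 : (s - c O)%C = RtoC 0).
  { apply Cmod_eq_0. apply Rle_antisym; [|apply Cmod_ge_0].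
    apply (Cmod_lim_sub_le (psum c (RtoC 0)) s (c O) 0 H).
    intros N. exists N. split; [lia|]. rewrite psum_at0. 
    replace (c O - c O)%C with (RtoC 0) by ring. rewrite Cmod_0. lra. }
  change (@eq C s (c O)). replace s with ((s - c O) + c O)%C by ring. rewrite H0. ring.
Qed.

Lemma ps_coef_bounded c h (R0 : R) : 0 < R0 < 1 ->
  (forall z, inU z -> ps_sum c z (h z)) ->
  exists M, 0 <= M /\ forall n, Cmod (c n) * R0 ^ n <= M.
Proof.
  intros HR Hs. set (z0 := RtoC R0).
  assert (Hz0 : Cmod z0 = R0) by (unfold z0; rewrite Cmod_R; apply Rabs_pos_eq; lra).
  assert (Hin : inU z0) by (unfold inU; change (Cmod z0 < 1); lra).
  destruct (Hs z0 Hin 1 ltac:(lra)) as [N HN].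
  set (f := fun k => Cmod (c k) * R0 ^ k).
  assert (Hf : forall k, 0 <= f k) by (intros; unfold f; apply Rmult_le_pos; [apply Cmod_ge_0|apply pow_le; lra]).
  exists (2 + sum_f_R0 f N). split.
  { pose proof (sum_f_R0_ge_term f N 0 Hf ltac:(lia)). specialize (Hf O). lra. }
  intros n. fold (f n). destruct (Compare_dec.le_lt_dec n N) as [Hn|Hn].
  - pose proof (sum_f_R0_ge_term f N n Hf Hn). lra.
  - destruct n as [|m]; [lia|].
    assert (Hm : (N <= m)%nat) by lia.
    pose proof (HN m Hm) as A. pose proof (HN (S m) ltac:(lia)) as B.
    change (Cnorm ?u) with (Cmod u) in A, B. rewrite psum_S in B.
    assert (f (S m) = Cmod (c (S m) * z0 ^ S m)%C).
    { unfold f. rewrite Cmod_mult, Cmod_pow, Hz0. reflexivity. }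
    assert (Cmod (c (S m) * z0 ^ S m)%C <= 2).
    { replace (c (S m) * z0 ^ S m)%C with ((psum c z0 m + c (S m) * z0 ^ S m - h z0) - (psum c z0 m - h z0))%C by ring.
      eapply Rle_trans. apply Cmod_sub_le. change (Csub ?a ?b) with (Cminus a b) in A, B. lra. }
    pose proof (sum_f_R0_ge_term f N 0 Hf ltac:(lia)). specialize (Hf O). lra.
Qed.

Lemma ps_term_le_geom c z M R0 n : 0 < R0 -> (forall n, Cmod (c n) * R0 ^ n <= M) ->
  Cmod (c n * z ^ n)%C <= M * (Cmod z / R0) ^ n.
Proof.
  intros HR Hc. rewrite Cmod_mult, Cmod_pow.
  replace (Cmod z) with (Cmod z / R0 * R0) at 1 by (field; lra).
  rewrite Rpow_mult_distr.
  assert (0 <= (Cmod z / R0) ^ n) by (apply pow_le, Rdiv_le_0_compat; [apply Cmod_ge_0 | lra]).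
  specialize (Hc n). nra.
Qed.

Lemma ps_remainder_le c h z M R0 m : 0 < R0 -> 0 <= M -> (forall n, Cmod (c n) * R0 ^ n <= M) ->
  Cmod z < R0 -> ps_sum c z (h z) ->
  Cmod (h z - psum c z m)%C <= M * (Cmod z / R0) ^ (S m) / (1 - Cmod z / R0).
Proof.
  intros HR HM Hc Hz Hs. set (q := Cmod z / R0).
  assert (Hq0 : 0 <= q) by (unfold q; apply Rdiv_le_0_compat; [apply Cmod_ge_0|lra]).
  assert (Hq1 : q < 1) by (unfold q; apply Rmult_lt_reg_r with R0; [lra|]; unfold Rdiv; rewrite Rmult_assoc, Rinv_l; lra).
  apply (Cmod_lim_sub_le (psum c z) (h z) (psum c z m)).
  { intros eps He. destruct (Hs eps He) as [N HN]. exists N. intros n Hn. apply HN; auto. }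
  intros N. exists (m + N)%nat. split; [lia|].
  rewrite !psum_as_csum. replace (S (m + N)) with (S m + N)%nat by lia.
  eapply Rle_trans; [apply (csum_sub_le_geom _ M q); [lra | intros n; apply ps_term_le_geom; auto]|].
  unfold Rdiv. apply Rmult_le_compat_r. left; apply Rinv_0_lt_compat; lra.
  assert (0 <= q ^ N) by (apply pow_le; lra).
  assert (0 <= M * q ^ S m) by (apply Rmult_le_pos; auto; apply pow_le; lra).
  nra.
Qed.

Lemma ps_remainder_le_pow c h M m : 0 <= M -> (forall n, Cmod (c n) * (1/2) ^ n <= M) ->
  (forall z, inU z -> ps_sum c z (h z)) ->
  forall z, Cmod z <= 1/4 -> Cmod (h z - psum c z m)%C <= (M * 2 ^ (m + 2)) * Cmod z ^ (S m).
Proof.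
  intros HM Hc Hs z Hz.
  assert (Hz0 : 0 <= Cmod z) by apply Cmod_ge_0.
  eapply Rle_trans. apply (ps_remainder_le c h z M (1/2) m); auto; try lra.
  apply Hs. unfold inU. change (Cmod z < 1). lra.
  replace (Cmod z / (1/2)) with (2 * Cmod z) by field.
  rewrite Rpow_mult_distr.
  assert (0 <= Cmod z ^ S m) by (apply pow_le; lra).
  assert (0 < 2 ^ S m) by (apply pow_lt; lra).
  apply Rmult_le_reg_r with (1 - 2 * Cmod z). lra.
  unfold Rdiv. rewrite Rmult_assoc, Rinv_l by lra. rewrite Rmult_1_r.
  replace (m + 2)%nat with (S (S m)) by lia. simpl.
  assert (0 <= M * (2 ^ m * Cmod z ^ S m)) by (apply Rmult_le_pos; auto; apply Rmult_le_pos; auto; apply pow_le; lra).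
  simpl in *. nra.
Qed.


Lemma Cpow_sub_le (z1 z2 : C) s k : Cmod z1 <= s -> Cmod z2 <= s ->
  Cmod (z1 ^ (S k) - z2 ^ (S k))%C <= INR (S k) * s ^ k * Cmod (z1 - z2)%C.
Proof.
  intros H1 H2. assert (Hs : 0 <= s) by (pose proof (Cmod_ge_0 z1); lra).
  induction k.
  - simpl. replace (z1 * 1 - z2 * 1)%C with (z1 - z2)%C by ring. lra.
  - replace (z1 ^ S (S k) - z2 ^ S (S k))%C with (z1 * (z1 ^ S k - z2 ^ S k) + (z1 - z2) * z2 ^ S k)%C
      by (simpl; ring).
    eapply Rle_trans. apply Cmod_triangle. rewrite !Cmod_mult, Cmod_pow.
    assert (Cmod z2 ^ S k <= s ^ S k) by (apply pow_incr; split; [apply Cmod_ge_0|auto]).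
    assert (0 <= Cmod (z1 - z2)%C) by apply Cmod_ge_0.
    assert (0 <= Cmod (z1 ^ S k - z2 ^ S k)%C) by apply Cmod_ge_0.
    assert (Cmod z1 * Cmod (z1 ^ S k - z2 ^ S k)%C <= s * (INR (S k) * s ^ k * Cmod (z1 - z2)%C)).
    { apply Rmult_le_compat; auto. apply Cmod_ge_0. }
    assert (Cmod (z1 - z2)%C * Cmod z2 ^ S k <= Cmod (z1 - z2)%C * s ^ S k) by (apply Rmult_le_compat_l; auto).
    rewrite !S_INR in *. simpl in *. nra.
Qed.

Lemma ps_term_sub_le c M z1 z2 s d : 0 <= M -> (forall n, Cmod (c n) * (1/2) ^ n <= M) ->
  Cmod z1 <= s -> Cmod z2 <= s -> s <= 1/4 ->
  Cmod (c (S (3 + d)) * (z1 ^ S (3 + d) - z2 ^ S (3 + d)))%C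
  <= 2 * M * (INR d + 4) * (2 * s) ^ 3 * (1/2) ^ d * Cmod (z1 - z2)%C.
Proof.
  intros HM Hc H1 H2 Hs4.
  assert (Hs0 : 0 <= s) by (pose proof (Cmod_ge_0 z1); lra).
  set (x := 2 * s). set (dz := Cmod (z1 - z2)%C).
  assert (Hdz : 0 <= dz) by apply Cmod_ge_0.
  rewrite Cmod_mult.
  pose proof (Cpow_sub_le z1 z2 s (3 + d) H1 H2) as Pd. fold dz in Pd.
  assert (Hck : Cmod (c (S (3 + d))) <= M * 2 ^ (S (3 + d))).
  { specialize (Hc (S (3 + d))). apply Rmult_le_reg_r with ((1/2) ^ S (3 + d)); [apply pow_lt; lra|].
    rewrite Rmult_assoc, <- Rpow_mult_distr. replace (2 * (1/2)) with 1 by field.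
    rewrite pow1. lra. }
  assert (Hxd : x ^ (3 + d) <= x ^ 3 * (1/2) ^ d).
  { rewrite pow_add. apply Rmult_le_compat_l; [apply pow_le; unfold x; lra|].
    apply pow_incr; unfold x; lra. }
  eapply Rle_trans; [apply Rmult_le_compat; [apply Cmod_ge_0 | apply Cmod_ge_0 | exact Hck | exact Pd]|].
  replace (M * 2 ^ S (3 + d) * (INR (S (3 + d)) * s ^ (3 + d) * dz)) with
    (2 * M * INR (S (3 + d)) * x ^ (3 + d) * dz) by (unfold x; rewrite Rpow_mult_distr; simpl; ring).
  replace (INR (S (3 + d))) with (INR d + 4) by (rewrite S_INR, plus_INR; simpl; ring).
  assert (0 <= INR d) by apply pos_INR.
  assert (0 <= 2 * M * (INR d + 4)) by nra.
  replace (2 * M * (INR d + 4) * x ^ 3 * (1 / 2) ^ d * dz) with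
    (2 * M * (INR d + 4) * (x ^ 3 * (1 / 2) ^ d) * dz) by ring.
  apply Rmult_le_compat_r; auto. apply Rmult_le_compat_l; auto.
Qed.

(* The closed form sums [sum_(j < d) (j + 4) / 2^j = 10 - 2 (d + 5) / 2^d]. *)
Lemma psum_tail_sub_le c M z1 z2 s d : 0 <= M -> (forall n, Cmod (c n) * (1/2) ^ n <= M) ->
  Cmod z1 <= s -> Cmod z2 <= s -> s <= 1/4 ->
  Cmod ((psum c z1 (3 + d) - psum c z1 3) - (psum c z2 (3 + d) - psum c z2 3))%C
  <= 2 * M * (2 * s) ^ 3 * (10 - 2 * (INR d + 5) / 2 ^ d) * Cmod (z1 - z2)%C.
Proof.
  intros HM Hc H1 H2 Hs4. induction d.
  - rewrite Nat.add_0_r. replace ((psum c z1 3 - psum c z1 3) - (psum c z2 3 - psum c z2 3))%C with (RtoC 0) by ring.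
    rewrite Cmod_0. simpl. right. field.
  - replace (3 + S d)%nat with (S (3 + d)) by lia. rewrite (psum_S c z1 (3+d)), (psum_S c z2 (3+d)).
    replace ((psum c z1 (3 + d) + c (S (3 + d)) * z1 ^ S (3 + d) - psum c z1 3) -
             (psum c z2 (3 + d) + c (S (3 + d)) * z2 ^ S (3 + d) - psum c z2 3))%C with
      (((psum c z1 (3 + d) - psum c z1 3) - (psum c z2 (3 + d) - psum c z2 3)) +
        c (S (3 + d)) * (z1 ^ S (3 + d) - z2 ^ S (3 + d)))%C by ring.
    eapply Rle_trans; [apply Cmod_triangle|].
    eapply Rle_trans; [apply Rplus_le_compat; [exact IHd | apply (ps_term_sub_le c M z1 z2 s d); auto]|].
    right. rewrite S_INR. simpl.
    assert (0 < 2 ^ d) by (apply pow_lt; lra).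
    replace ((1/2) ^ d) with (/ 2 ^ d) by (rewrite <- pow_inv; f_equal; field).
    field. lra.
Qed.

Lemma ps_remainder_lipschitz c h M : 0 <= M -> (forall n, Cmod (c n) * (1/2) ^ n <= M) ->
  (forall z, inU z -> ps_sum c z (h z)) ->
  forall z1 z2 s, Cmod z1 <= s -> Cmod z2 <= s -> s <= 1/4 ->
  Cmod ((h z1 - psum c z1 3) - (h z2 - psum c z2 3))%C <= 160 * M * s ^ 3 * Cmod (z1 - z2)%C.
Proof.
  intros HM Hc Hs z1 z2 s H1 H2 Hs4.
  assert (Hs0 : 0 <= s) by (pose proof (Cmod_ge_0 z1); lra).
  set (x := 2 * s). set (dz := Cmod (z1 - z2)%C).
  assert (Hdz : 0 <= dz) by apply Cmod_ge_0.
  assert (In1 : inU z1) by (unfold inU; change (Cmod z1 < 1); lra).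
  assert (In2 : inU z2) by (unfold inU; change (Cmod z2 < 1); lra).
  replace ((h z1 - psum c z1 3) - (h z2 - psum c z2 3))%C with
    ((h z1 - h z2) - (psum c z1 3 - psum c z2 3))%C by ring.
  apply (Cmod_lim_sub_le (fun n => psum c z1 n - psum c z2 n)%C).
  - intros eps He. destruct (Hs z1 In1 (eps/2) ltac:(lra)) as [N1 HN1].
    destruct (Hs z2 In2 (eps/2) ltac:(lra)) as [N2 HN2].
    exists (max N1 N2). intros n Hn.
    specialize (HN1 n ltac:(lia)). specialize (HN2 n ltac:(lia)).
    change (Cnorm (Csub ?a ?b)) with (Cmod (a - b)%C) in HN1, HN2.
    replace (psum c z1 n - psum c z2 n - (h z1 - h z2))%C with
      ((psum c z1 n - h z1) - (psum c z2 n - h z2))%C by ring.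
    eapply Rle_lt_trans. apply Cmod_sub_le. lra.
  - intros N. exists (3 + N)%nat. split; [lia|].
    replace (psum c z1 (3 + N) - psum c z2 (3 + N) - (psum c z1 3 - psum c z2 3))%C with
      ((psum c z1 (3 + N) - psum c z1 3) - (psum c z2 (3 + N) - psum c z2 3))%C by ring.
    eapply Rle_trans. apply (psum_tail_sub_le c M z1 z2 s N); auto. fold x dz.
    assert (0 < 2 ^ N) by (apply pow_lt; lra).
    assert (0 <= 2 * (INR N + 5) / 2 ^ N) by (apply Rdiv_le_0_compat; [pose proof (pos_INR N)|]; lra).
    assert (0 <= 2 * M * x ^ 3) by (apply Rmult_le_pos; [lra|apply pow_le; unfold x; lra]).
    replace (160 * M * s ^ 3 * dz) with (2 * M * x ^ 3 * 10 * dz) by (unfold x; ring).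
    apply Rmult_le_compat_r; auto. apply Rmult_le_compat_l; auto. lra.
Qed.

Lemma psum_2 c (w : C) : psum c w 2 = (c O + c 1%nat * w + c 2%nat * w ^ 2)%C.
Proof. apply injective_projections; simpl; ring. Qed.

Lemma psum_3 c (w : C) : psum c w 3 = (c O + c 1%nat * w + c 2%nat * w ^ 2 + c 3%nat * w ^ 3)%C.
Proof. apply injective_projections; simpl; ring. Qed.

Lemma cderiv_ps_rem2_step c h hd M (z : C) kap : 0 <= M -> (forall n, Cmod (c n) * (1/2) ^ n <= M) ->
  (forall z, inU z -> ps_sum c z (h z)) -> Cmod z <= 1/8 -> 0 < kap <= 1/8 ->
  Cmod (hd z - (c 1%nat + RtoC 2 * c 2%nat * z + RtoC 3 * c 3%nat * z ^ 2))%C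
  <= Cmod ((h (z + RtoC kap) - h z) / RtoC kap - hd z)%C + 160 * M * (Cmod z + kap) ^ 3
     + (Cmod (c 2%nat) + Cmod (c 3%nat)) * kap.
Proof.
  intros HM Hc Hs Hz Hk.
  assert (Hz0 : 0 <= Cmod z) by apply Cmod_ge_0.
  set (k := RtoC kap).
  assert (Hkm : Cmod k = kap) by (apply Cmod_RtoC_nonneg; lra).
  assert (Hkn : k <> RtoC 0) by (apply RtoC_neq0; lra).
  set (s := Cmod z + kap).
  assert (Hzk : Cmod (z + k)%C <= s) by (unfold s; rewrite <- Hkm; apply Cmod_triangle).
  pose proof (ps_remainder_lipschitz c h M HM Hc Hs (z + k)%C z s Hzk ltac:(unfold s; lra) ltac:(unfold s; lra)) as TL.
  replace (z + k - z)%C with k in TL by ring. rewrite Hkm, !psum_3 in TL.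
  set (T := ((h (z + k) - (c O + c 1%nat * (z + k) + c 2%nat * (z + k) ^ 2 + c 3%nat * (z + k) ^ 3)) -
            (h z - (c O + c 1%nat * z + c 2%nat * z ^ 2 + c 3%nat * z ^ 3)))%C) in TL.
  replace (hd z - (c 1%nat + RtoC 2 * c 2%nat * z + RtoC 3 * c 3%nat * z ^ 2))%C with
    (- ((h (z + k) - h z) / k - hd z) + T / k + c 2%nat * k + c 3%nat * (RtoC 3 * z * k + k ^ 2))%C
    by (unfold T; field; exact Hkn).
  assert (HT : Cmod (T / k)%C <= 160 * M * s ^ 3).
  { rewrite Cmod_div by exact Hkn. rewrite Hkm. apply Rmult_le_reg_r with kap; [lra|].
    unfold Rdiv. rewrite Rmult_assoc, Rinv_l by lra. lra. }
  assert (H2 : Cmod (c 2%nat * k)%C <= Cmod (c 2%nat) * kap) by (rewrite Cmod_mult, Hkm; lra).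
  assert (H3 : Cmod (c 3%nat * (RtoC 3 * z * k + k ^ 2))%C <= Cmod (c 3%nat) * kap).
  { rewrite Cmod_mult. apply Rmult_le_compat_l; [apply Cmod_ge_0|].
    eapply Rle_trans; [apply Cmod_triangle|].
    rewrite !Cmod_mult, Cmod_pow, Cmod_RtoC_nonneg, Hkm by lra. nra. }
  eapply Rle_trans. apply Cmod_triangle.
  eapply Rle_trans. apply Rplus_le_compat_r. apply Cmod_triangle.
  eapply Rle_trans. apply Rplus_le_compat_r. apply Rplus_le_compat_r. apply Cmod_triangle.
  rewrite Cmod_opp. lra.
Qed.

Lemma cderiv_ps_rem2 c h hd M : 0 <= M -> (forall n, Cmod (c n) * (1/2) ^ n <= M) ->
  (forall z, inU z -> ps_sum c z (h z)) ->
  (forall z, inU z -> has_cderiv h z (hd z)) ->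
  forall z, Cmod z <= 1/8 ->
  Cmod (hd z - (c 1%nat + RtoC 2 * c 2%nat * z + RtoC 3 * c 3%nat * z ^ 2))%C <= 160 * M * Cmod z ^ 3.
Proof.
  intros HM Hc Hs Hd z Hz.
  assert (Hz0 : 0 <= Cmod z) by apply Cmod_ge_0.
  apply Rle_plus_epsilon. intros e He.
  set (A := 160 * M + Cmod (c 2%nat) + Cmod (c 3%nat) + 1).
  assert (HA : 1 <= A) by (unfold A; pose proof (Cmod_ge_0 (c 2%nat)); pose proof (Cmod_ge_0 (c 3%nat)); lra).
  destruct (Hd z ltac:(unfold inU; change (Cmod z < 1); lra) (e/2) ltac:(lra)) as [del [Hdel Hdq]].
  set (kap := Rmin (del/2) (Rmin (1/8) (e / (2 * A)))).
  assert (Hk0 : 0 < kap) by (unfold kap; repeat apply Rmin_pos; try lra; apply Rdiv_lt_0_compat; lra).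
  assert (Hk1 : kap <= del/2) by apply Rmin_l.
  assert (Hk2 : kap <= 1/8) by (unfold kap; eapply Rle_trans; [apply Rmin_r|apply Rmin_l]).
  assert (Hk3 : kap <= e / (2 * A)) by (unfold kap; eapply Rle_trans; [apply Rmin_r|apply Rmin_r]).
  pose proof (cderiv_ps_rem2_step c h hd M z kap HM Hc Hs Hz ltac:(lra)) as Step.
  assert (Hq : Cmod ((h (z + RtoC kap) - h z) / RtoC kap - hd z)%C < e / 2).
  { apply (Hdq (RtoC kap)); [apply RtoC_neq0; lra|]. rewrite Cmod_RtoC_nonneg; lra. }
  assert (Hs3 : (Cmod z + kap) ^ 3 <= Cmod z ^ 3 + kap).
  { assert (Q : 3 * Cmod z ^ 2 + 3 * Cmod z * kap + kap ^2 <= 1) by nra.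
    assert (kap * (3 * Cmod z ^ 2 + 3 * Cmod z * kap + kap ^2) <= kap * 1) by (apply Rmult_le_compat_l; lra).
    replace ((Cmod z + kap) ^ 3) with (Cmod z ^ 3 + kap * (3 * Cmod z ^ 2 + 3 * Cmod z * kap + kap ^2)) by ring.
    lra. }
  assert (A * kap <= e / 2).
  { apply Rmult_le_reg_r with (/ A); [apply Rinv_0_lt_compat; lra|].
    rewrite Rmult_comm, <- Rmult_assoc, Rinv_l by lra.
    replace (e / 2 * / A) with (e / (2 * A)) by (field; lra). lra. }
  assert (160 * M * (Cmod z + kap) ^ 3 <= 160 * M * (Cmod z ^ 3 + kap)) by (apply Rmult_le_compat_l; lra).
  unfold A in *. nra.
Qed.

(** * Big-O as t -> 0+ along the positive real axis *)

Definition bigO (n : nat) (F : R -> C) : Prop :=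
  exists K rho, 0 < rho /\ forall t, 0 < t <= rho -> Cmod (F t) <= K * t ^ n.

Lemma bigO_nonneg_const n F : bigO n F -> exists K rho, 0 <= K /\ 0 < rho /\ forall t, 0 < t <= rho -> Cmod (F t) <= K * t ^ n.
Proof.
  intros [K [rho [Hr H]]]. exists (Rmax K 0), rho. split; [apply Rmax_r|split; auto].
  intros t Ht. eapply Rle_trans. apply H; auto. apply Rmult_le_compat_r.
  apply pow_le; lra. apply Rmax_l.
Qed.

Lemma bigO_eventually_ext n F G : bigO n F -> (exists r0, 0 < r0 /\ forall t, 0 < t <= r0 -> F t = G t) -> bigO n G.
Proof.
  intros [K [rho [Hr H]]] [r0 [H0 HE]]. exists K, (Rmin rho r0). split.
  apply Rmin_pos; auto. intros t Ht.
  pose proof (Rmin_l rho r0); pose proof (Rmin_r rho r0).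
  rewrite <- HE by lra. apply H; lra.
Qed.

Lemma bigO_ext n F G : bigO n F -> (forall t, 0 < t -> F t = G t) -> bigO n G.
Proof. intros H E. apply (bigO_eventually_ext n F G H). exists 1. split; [lra|]. intros; apply E; lra. Qed.

Lemma bigO_add n F G : bigO n F -> bigO n G -> bigO n (fun t => F t + G t)%C.
Proof.
  intros [K1 [r1 [H1 B1]]] [K2 [r2 [H2 B2]]]. exists (K1 + K2), (Rmin r1 r2). split.
  apply Rmin_pos; auto. intros t Ht.
  pose proof (Rmin_l r1 r2); pose proof (Rmin_r r1 r2).
  eapply Rle_trans. apply Cmod_triangle. specialize (B1 t ltac:(lra)). specialize (B2 t ltac:(lra)). lra.
Qed.

Lemma bigO_opp n F : bigO n F -> bigO n (fun t => - F t)%C.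
Proof. intros [K [r [H B]]]. exists K, r. split; auto. intros t Ht. rewrite Cmod_opp. auto. Qed.

Lemma bigO_sub n F G : bigO n F -> bigO n G -> bigO n (fun t => F t - G t)%C.
Proof. intros. apply bigO_add; auto. apply bigO_opp; auto. Qed.

Lemma bigO_mul m n F G : bigO m F -> bigO n G -> bigO (m + n) (fun t => F t * G t)%C.
Proof.
  intros HF HG. apply bigO_nonneg_const in HF as [K1 [r1 [K1p [H1 B1]]]]. apply bigO_nonneg_const in HG as [K2 [r2 [K2p [H2 B2]]]].
  exists (K1 * K2), (Rmin r1 r2). split.
  apply Rmin_pos; auto. intros t Ht.
  pose proof (Rmin_l r1 r2); pose proof (Rmin_r r1 r2).
  rewrite Cmod_mult, pow_add. specialize (B1 t ltac:(lra)). specialize (B2 t ltac:(lra)).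
  replace (K1 * K2 * (t ^ m * t ^ n)) with ((K1 * t ^ m) * (K2 * t ^ n)) by ring.
  apply Rmult_le_compat; auto; apply Cmod_ge_0.
Qed.

Lemma bigO_sqr m F : bigO m F -> bigO (m + m) (fun t => F t ^ 2)%C.
Proof. intros H. apply (bigO_ext _ (fun t => F t * F t)%C). apply bigO_mul; auto. intros; ring. Qed.

Lemma bigO_const c : bigO 0 (fun _ => c).
Proof. exists (Cmod c), 1. split; [lra|]. intros. simpl. lra. Qed.

Lemma bigO_RtoC : bigO 1 (fun t => RtoC t).
Proof. exists 1, 1. split; [lra|]. intros t Ht. rewrite Cmod_RtoC_nonneg by lra. lra. Qed.

Lemma bigO_RtoC_pow n : bigO n (fun t => RtoC t ^ n)%C.
Proof. exists 1, 1. split; [lra|]. intros t Ht. rewrite Cmod_pow, Cmod_RtoC_nonneg by lra. lra. Qed.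

Lemma pow_le_pow_of_le1 t m n : 0 <= t <= 1 -> (m <= n)%nat -> t^n <= t^m.
Proof. intros Ht. induction 1; [lra|]. simpl. assert (0 <= t^m0) by (apply pow_le; lra). nra. Qed.

Lemma bigO_weaken m n F : (m <= n)%nat -> bigO n F -> bigO m F.
Proof.
  intros Hmn [K [r [H B]]]. exists K, (Rmin r 1). split. apply Rmin_pos; lra.
  intros t Ht. pose proof (Rmin_l r 1); pose proof (Rmin_r r 1).
  specialize (B t ltac:(lra)). eapply Rle_trans. apply B.
  destruct (Rle_dec 0 K).
  - apply Rmult_le_compat_l; auto. apply pow_le_pow_of_le1; auto; lra.
  - assert (0 <= K * t^n) by (pose proof (Cmod_ge_0 (F t)); lra).
    assert (0 < t^n) by (apply pow_lt; lra). nra.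
Qed.

Lemma bigO_monomial k n (a : C) : (n <= k)%nat -> bigO n (fun t => a * RtoC t ^ k)%C.
Proof.
  intros H. apply (bigO_weaken n k); auto. replace k with (0 + k)%nat by lia.
  apply bigO_mul. apply bigO_const. apply bigO_RtoC_pow.
Qed.

Lemma bigO_div_t n F : bigO (S n) F -> bigO n (fun t => F t / RtoC t)%C.
Proof.
  intros [K [r [H B]]]. exists K, r. split; auto. intros t Ht.
  rewrite Cmod_div. 2:{ intro E. apply (f_equal fst) in E. simpl in E. lra. }
  rewrite Cmod_RtoC_nonneg by lra. apply Rmult_le_reg_r with t. lra.
  unfold Rdiv. rewrite Rmult_assoc, Rinv_l by lra. specialize (B t Ht). simpl in B. lra.
Qed.

Lemma bigO_monomial_eq0 n c : bigO (S n) (fun t => c * RtoC t ^ n)%C -> c = RtoC 0.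
Proof.
  intros HF. apply bigO_nonneg_const in HF as [K [r [HK [Hr B]]]].
  apply Cmod_eq_0. destruct (Req_dec (Cmod c) 0) as [E|E]; auto. exfalso.
  pose proof (Cmod_ge_0 c).
  set (t := Rmin r (Cmod c / (2 * (K + 1)))).
  assert (Ht : 0 < t) by (unfold t; apply Rmin_pos; auto; apply Rdiv_lt_0_compat; lra).
  assert (Ht1 : t <= r) by apply Rmin_l.
  assert (Ht2 : t <= Cmod c / (2 * (K + 1))) by apply Rmin_r.
  specialize (B t ltac:(lra)). rewrite Cmod_mult, Cmod_pow, Cmod_RtoC_nonneg in B by lra.
  assert (0 < t ^ n) by (apply pow_lt; lra). simpl in B.
  assert (Cmod c <= K * t) by (apply Rmult_le_reg_r with (t ^ n); auto; nra).
  assert (t * (2 * (K + 1)) <= Cmod c).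
  { apply Rmult_le_reg_r with (/ (2 * (K + 1))). apply Rinv_0_lt_compat; lra.
    rewrite Rmult_assoc, Rinv_r by lra. lra. }
  nra.
Qed.

Lemma poly2_eq0_of_bigO3 e1 e2 : bigO 3 (fun t => e1 * RtoC t + e2 * RtoC t ^ 2)%C -> e1 = RtoC 0 /\ e2 = RtoC 0.
Proof.
  intros H.
  assert (H1 : bigO 2 (fun t => e1 * RtoC t ^ 1)%C).
  { apply (bigO_ext 2 (fun t => (e1 * RtoC t + e2 * RtoC t ^ 2) - e2 * RtoC t ^ 2)%C).
    apply bigO_sub. apply (bigO_weaken 2 3); auto. apply bigO_monomial; auto. intros; ring. }
  apply (bigO_monomial_eq0 1 e1) in H1. split; auto.
  apply (bigO_monomial_eq0 2). apply (bigO_ext 3 (fun t => (e1 * RtoC t + e2 * RtoC t ^ 2))%C); auto.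
  intros. rewrite H1. ring.
Qed.

Lemma poly3_eq0_of_bigO4 e1 e2 e3 : bigO 4 (fun t => e1 * RtoC t + e2 * RtoC t ^ 2 + e3 * RtoC t ^ 3)%C ->
  e1 = RtoC 0 /\ e2 = RtoC 0 /\ e3 = RtoC 0.
Proof.
  intros H.
  assert (H1 : bigO 3 (fun t => e1 * RtoC t + e2 * RtoC t ^ 2)%C).
  { apply (bigO_ext 3 (fun t => (e1 * RtoC t + e2 * RtoC t ^ 2 + e3 * RtoC t ^ 3) - e3 * RtoC t ^ 3)%C).
    apply bigO_sub. apply (bigO_weaken 3 4); auto. apply bigO_monomial; auto. intros; ring. }
  apply poly2_eq0_of_bigO3 in H1 as [E1 E2]. split; auto. split; auto.
  apply (bigO_monomial_eq0 3). apply (bigO_ext 4 (fun t => (e1 * RtoC t + e2 * RtoC t ^ 2 + e3 * RtoC t ^ 3))%C); auto.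
  intros. rewrite E1, E2. ring.
Qed.

Lemma bigO_near1_bounded_below F : bigO 1 (fun t => F t - 1)%C -> exists r0, 0 < r0 /\ forall t, 0 < t <= r0 -> Cmod (F t) >= 1/2.
Proof.
  intros HF. apply bigO_nonneg_const in HF as [K [r [HK [Hr B]]]].
  exists (Rmin r (1 / (2 * (K + 1)))). split. apply Rmin_pos; auto. apply Rdiv_lt_0_compat; lra.
  intros t Ht. pose proof (Rmin_l r (1 / (2 * (K + 1)))); pose proof (Rmin_r r (1 / (2 * (K + 1)))).
  specialize (B t ltac:(lra)). simpl in B.
  assert (t * (2 * (K + 1)) <= 1).
  { apply Rmult_le_reg_r with (/ (2 * (K + 1))). apply Rinv_0_lt_compat; lra.
    rewrite Rmult_assoc, Rinv_r by lra. lra. }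
  assert (Cmod (F t - 1)%C <= 1/2) as Hc by nra.
  pose proof (Cmod_triangle (F t) (- (F t - 1))%C) as T.
  replace (F t + - (F t - 1))%C with (RtoC 1) in T by ring.
  rewrite Cmod_opp, Cmod_1 in T. lra.
Qed.

Lemma bigO_inv_near1 F : bigO 1 (fun t => F t - 1)%C -> bigO 0 (fun t => / F t)%C.
Proof.
  intros HF. destruct (bigO_near1_bounded_below F HF) as [r0 [Hr B]]. exists 2, r0. split; auto.
  intros t Ht. specialize (B t Ht). rewrite Cmod_inv.
  2:{ intro E. rewrite E, Cmod_0 in B. lra. }
  simpl. rewrite Rmult_1_r. apply Rmult_le_reg_r with (Cmod (F t)). lra.
  rewrite Rinv_l by lra. lra.
Qed.

Lemma bigO_comp n (G : C -> C) (u : R -> C) rho1 K :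
  0 < rho1 -> (forall z, Cmod z <= rho1 -> Cmod (G z) <= K * Cmod z ^ n) ->
  bigO 1 u -> bigO n (fun t => G (u t)).
Proof.
  intros Hr1 HG Hu. apply bigO_nonneg_const in Hu as [K1 [r [HK1 [Hr B]]]].
  exists (Rmax K 0 * K1 ^ n), (Rmin r (rho1 / (K1 + 1))). split.
  apply Rmin_pos; auto. apply Rdiv_lt_0_compat; lra.
  intros t Ht. pose proof (Rmin_l r (rho1 / (K1 + 1))); pose proof (Rmin_r r (rho1 / (K1 + 1))).
  specialize (B t ltac:(lra)). simpl in B. rewrite Rmult_1_r in B.
  assert (t * (K1 + 1) <= rho1).
  { apply Rmult_le_reg_r with (/ (K1 + 1)). apply Rinv_0_lt_compat; lra.
    rewrite Rmult_assoc, Rinv_r by lra. lra. }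
  assert (Hu : Cmod (u t) <= rho1) by nra.
  eapply Rle_trans. apply HG; auto.
  eapply Rle_trans. apply Rmult_le_compat_r. apply pow_le, Cmod_ge_0. apply Rmax_l.
  rewrite Rmult_assoc, <- Rpow_mult_distr. apply Rmult_le_compat_l. apply Rmax_r.
  apply pow_incr. split; auto. apply Cmod_ge_0.
Qed.

Lemma bigO_of_local_bound n (G : C -> C) rho1 K : 0 < rho1 ->
  (forall z, Cmod z <= rho1 -> Cmod (G z) <= K * Cmod z ^ n) -> bigO n (fun t => G (RtoC t)).
Proof. intros H1 H2. exact (bigO_comp n G (fun t => RtoC t) rho1 K H1 H2 bigO_RtoC). Qed.

Lemma ps_remainder_bigO c h m (u : R -> C) : (forall z, inU z -> ps_sum c z (h z)) ->
  bigO 1 u -> bigO (S m) (fun t => h (u t) - psum c (u t) m)%C.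
Proof.
  intros Hs Hu. destruct (ps_coef_bounded c h (1/2) ltac:(lra) Hs) as [M [HM Hc]].
  apply (bigO_comp (S m) (fun z => h z - psum c z m)%C u (1/4) (M * 2 ^ (m + 2))); auto; [lra|].
  intros z Hz. apply ps_remainder_le_pow; auto.
Qed.

(** * Expansions of [z h'(z)/h(z)] and of [((1+z)/(1-z))^beta] near 0 *)

Lemma bigO_log_deriv_rem2 (H dH : R -> C) (c2 c3 : C) :
  bigO 4 (fun t => H t - (RtoC t + c2 * RtoC t ^ 2 + c3 * RtoC t ^ 3))%C ->
  bigO 3 (fun t => dH t - (1 + RtoC 2 * c2 * RtoC t + RtoC 3 * c3 * RtoC t ^ 2))%C ->
  bigO 3 (fun t => RtoC t * dH t / H t - (1 + c2 * RtoC t + (RtoC 2 * c3 - c2 ^ 2) * RtoC t ^ 2))%C.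
Proof.
  intros H4 D3.
  set (E := fun t => ((H t - (RtoC t + c2 * RtoC t ^ 2 + c3 * RtoC t ^ 3)) / RtoC t)%C).
  assert (E3 : bigO 3 E) by (apply bigO_div_t; exact H4).
  set (Dn := fun t => (1 + c2 * RtoC t + c3 * RtoC t ^ 2 + E t)%C).
  assert (HDn1 : bigO 1 (fun t => Dn t - 1)%C).
  { apply (bigO_ext 1 (fun t => c2 * RtoC t ^ 1 + c3 * RtoC t ^ 2 + E t)%C).
    - apply bigO_add; [apply bigO_add; apply bigO_monomial; auto | apply (bigO_weaken 1 3); auto].
    - intros; unfold Dn; ring. }
  assert (HDi : bigO 0 (fun t => / Dn t)%C) by (apply bigO_inv_near1; exact HDn1).
  destruct (bigO_near1_bounded_below Dn HDn1) as [r0 [Hr0 HDnz]].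
  set (S := fun t => (1 + c2 * RtoC t + (RtoC 2 * c3 - c2 ^ 2) * RtoC t ^ 2)%C).
  assert (HS : bigO 0 S).
  { apply (bigO_ext 0 (fun t => 1 + c2 * RtoC t ^ 1 + (RtoC 2 * c3 - c2 ^ 2) * RtoC t ^ 2)%C).
    - apply bigO_add; [apply bigO_add; [apply bigO_const | apply bigO_monomial; auto] |].
      apply (bigO_monomial 2 0); auto.
    - intros; unfold S; ring. }
  assert (X3 : bigO 3 (fun t => dH t - S t * Dn t)%C).
  { apply (bigO_ext 3 (fun t =>
       (dH t - (1 + RtoC 2 * c2 * RtoC t + RtoC 3 * c3 * RtoC t ^ 2))
       - (c2 * (RtoC 2 * c3 - c2 ^ 2) + c2 * c3) * RtoC t ^ 3
       - c3 * (RtoC 2 * c3 - c2 ^ 2) * RtoC t ^ 4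
       - S t * E t)%C).
    - apply bigO_sub; [apply bigO_sub; [apply bigO_sub|]|]; auto; try (apply bigO_monomial; auto).
      replace 3%nat with (0 + 3)%nat by reflexivity. apply bigO_mul; auto.
    - intros t Ht. unfold S, Dn. ring. }
  apply (bigO_eventually_ext 3 (fun t => (dH t - S t * Dn t) * / Dn t)%C).
  { replace 3%nat with (3 + 0)%nat by reflexivity. apply bigO_mul; auto. }
  exists r0. split; auto. intros t Ht.
  assert (Dnz : Dn t <> RtoC 0).
  { intro Z. specialize (HDnz t Ht). rewrite Z, Cmod_0 in HDnz. lra. }
  assert (tnz : RtoC t <> RtoC 0) by (apply RtoC_neq0; lra).
  assert (Hh : H t = (RtoC t * Dn t)%C) by (unfold Dn, E; field; exact tnz).
  rewrite Hh. fold (S t). field. split; auto.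
Qed.

Lemma starlike_quot_rem2 c h hd : c O = RtoC 0 -> c 1%nat = RtoC 1 ->
  (forall z, inU z -> ps_sum c z (h z)) -> (forall z, inU z -> has_cderiv h z (hd z)) ->
  bigO 3 (fun t => starlike_quot h hd (RtoC t) -
     (1 + c 2%nat * RtoC t + (RtoC 2 * c 3%nat - c 2%nat ^ 2) * RtoC t ^ 2))%C.
Proof.
  intros H0 H1 Hs Hd.
  destruct (ps_coef_bounded c h (1/2) ltac:(lra) Hs) as [M [HM Hc]].
  assert (H4 : bigO 4 (fun t => h (RtoC t) - (RtoC t + c 2%nat * RtoC t ^ 2 + c 3%nat * RtoC t ^ 3))%C).
  { apply (bigO_ext 4 (fun t => h (RtoC t) - psum c (RtoC t) 3)%C).
    - exact (ps_remainder_bigO c h 3 _ Hs bigO_RtoC).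
    - intros t _. rewrite psum_3, H0, H1. ring. }
  assert (D3 : bigO 3 (fun t => hd (RtoC t) - (1 + RtoC 2 * c 2%nat * RtoC t + RtoC 3 * c 3%nat * RtoC t ^ 2))%C).
  { rewrite <- H1.
    apply (bigO_of_local_bound 3 (fun z => hd z - (c 1%nat + RtoC 2 * c 2%nat * z + RtoC 3 * c 3%nat * z ^ 2))%C (1/8) (160 * M)); [lra|].
    intros z Hz. apply cderiv_ps_rem2 with h; auto. }
  apply (bigO_eventually_ext 3 _ _ (bigO_log_deriv_rem2 _ _ _ _ H4 D3)).
  exists 1. split; [lra|]. intros t Ht.
  unfold starlike_quot. simpl fst. destruct (Req_EM_T t 0); [lra | reflexivity].
Qed.

Lemma strong_fun_comp_rem2 beta (U : R -> C) d1 d2 : 0 < beta <= 1 ->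
  bigO 3 (fun t => U t - (d1 * RtoC t + d2 * RtoC t ^ 2))%C ->
  bigO 3 (fun t => strong_fun beta (U t) -
    (1 + RtoC (2 * beta) * d1 * RtoC t
       + (RtoC (2 * beta) * d2 + RtoC (2 * beta ^ 2) * d1 ^ 2) * RtoC t ^ 2))%C.
Proof.
  intros Hb U3.
  assert (V2 : bigO 2 (fun t => U t - d1 * RtoC t)%C).
  { apply (bigO_ext 2 (fun t => (U t - (d1 * RtoC t + d2 * RtoC t ^ 2)) + d2 * RtoC t ^ 2)%C).
    - apply bigO_add; [apply (bigO_weaken 2 3); auto | apply bigO_monomial; auto].
    - intros t _. ring. }
  assert (V1 : bigO 1 U).
  { apply (bigO_ext 1 (fun t => (U t - d1 * RtoC t) + d1 * RtoC t ^ 1)%C).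
    - apply bigO_add; [apply (bigO_weaken 1 2); auto | apply bigO_monomial; auto].
    - intros; ring. }
  assert (W1 : bigO 1 (fun t => U t + d1 * RtoC t)%C).
  { apply (bigO_ext 1 (fun t => U t + d1 * RtoC t ^ 1)%C).
    - apply bigO_add; auto. apply bigO_monomial; auto.
    - intros; ring. }
  assert (P3 : bigO 3 (fun t => strong_fun beta (U t) - strong_fun_taylor2 beta (U t))%C).
  { apply (bigO_comp 3 (fun z => strong_fun beta z - strong_fun_taylor2 beta z)%C U (1/8) 1000); auto; [lra|].
    intros z Hz. apply strong_fun_rem2; auto. }
  apply (bigO_ext 3 (fun t => (strong_fun beta (U t) - strong_fun_taylor2 beta (U t))
      + RtoC (2 * beta) * (U t - (d1 * RtoC t + d2 * RtoC t ^ 2))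
      + RtoC (2 * beta ^ 2) * ((U t - d1 * RtoC t) * (U t + d1 * RtoC t)))%C).
  - apply bigO_add; [apply bigO_add; auto|].
    + replace 3%nat with (0 + 3)%nat by reflexivity. apply bigO_mul; auto. apply bigO_const.
    + replace 3%nat with (0 + (2 + 1))%nat by reflexivity. apply bigO_mul; [apply bigO_const|].
      apply bigO_mul; auto.
  - intros t _. unfold strong_fun_taylor2. ring.
Qed.

(** * The Cauchy estimate for the second coefficient of a Schwarz function *)

Lemma csum_geom (w : C) n : ((1 - w) * csum (fun k => w ^ k) n = 1 - w ^ n)%C.
Proof. induction n; simpl csum. simpl. ring. rewrite Cmult_plus_distr_l, IHn. simpl. ring. Qed.

Lemma csum_geom_root_eq0 (w : C) n : w <> RtoC 1 -> (w ^ n = 1)%C -> csum (fun k => w ^ k)%C n = RtoC 0.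
Proof.
  intros H1 H2. pose proof (csum_geom w n) as G. rewrite H2 in G.
  assert (Hw : (1 - w)%C <> RtoC 0).
  { intro E. apply H1. replace w with (1 - (1 - w))%C by ring. rewrite E. ring. }
  replace (csum (fun k => (w ^ k)%C) n) with (/ (1 - w) * ((1 - w) * csum (fun k => (w ^ k)%C) n))%C
    by (field; auto).
  rewrite G. ring.
Qed.

Definition root1 (N : nat) : C := (cos (2 * PI / INR N), sin (2 * PI / INR N)).

Lemma root1_pow N k : (root1 N ^ k)%C = (cos (INR k * (2 * PI / INR N)), sin (INR k * (2 * PI / INR N))).
Proof.
  induction k.
  - simpl. rewrite Rmult_0_l, cos_0, sin_0. reflexivity.
  - rewrite Cpow_S, IHk. unfold root1. rewrite S_INR.
    set (th := 2 * PI / INR N).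
    replace ((INR k + 1) * th) with (th + INR k * th) by ring.
    rewrite cos_plus, sin_plus. apply injective_projections; simpl; ring.
Qed.

Lemma Cmod_root1 N : Cmod (root1 N) = 1.
Proof.
  unfold root1, Cmod. simpl. rewrite Rplus_comm. 
  replace (sin (2 * PI / INR N) * (sin (2 * PI / INR N) * 1) + cos (2 * PI / INR N) * (cos (2 * PI / INR N) * 1))
    with ((sin (2 * PI / INR N))² + (cos (2 * PI / INR N))²) by (unfold Rsqr; ring).
  rewrite sin2_cos2. apply sqrt_1.
Qed.

Lemma root1_pow_N N : (0 < N)%nat -> (root1 N ^ N = 1)%C.
Proof.
  intros H. rewrite root1_pow.
  replace (INR N * (2 * PI / INR N)) with (2 * PI) by (field; apply not_0_INR; lia).
  rewrite cos_2PI, sin_2PI. reflexivity.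
Qed.

Lemma root1_pow_neq1 N j : (0 < j < N)%nat -> (root1 N ^ j)%C <> RtoC 1.
Proof.
  intros H E. rewrite root1_pow in E. apply (f_equal fst) in E. simpl in E.
  set (th := INR j * (2 * PI / INR N)) in E.
  assert (Hth : 0 < th / 2 < PI).
  { unfold th. assert (0 < INR j) by (apply lt_0_INR; lia).
    assert (INR j < INR N) by (apply lt_INR; lia).
    assert (0 < INR N) by lra. pose proof PI_RGT_0. split.
    - apply Rdiv_lt_0_compat; [|lra]. apply Rmult_lt_0_compat; auto. apply Rdiv_lt_0_compat; lra.
    - replace (INR j * (2 * PI / INR N) / 2) with (PI * (INR j / INR N)) by (field; lra).
      rewrite <- (Rmult_1_r PI) at 2. apply Rmult_lt_compat_l; auto.
      apply Rmult_lt_reg_r with (INR N); auto. unfold Rdiv. rewrite Rmult_assoc, Rinv_l; lra. }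
  pose proof (sin_gt_0 (th/2) ltac:(lra) ltac:(lra)).
  replace th with (2 * (th / 2)) in E by field. rewrite cos_2a_sin in E. nra.
Qed.

Definition root1_power_sum N j := csum (fun k => ((root1 N ^ j) ^ k)%C) N.

Lemma Cmod_root1_power_sum_le N j : Cmod (root1_power_sum N j) <= INR N.
Proof.
  unfold root1_power_sum. rewrite <- (Rmult_1_r (INR N)). apply Cmod_csum_le.
  intros k _. rewrite !Cmod_pow, Cmod_root1, !pow1. lra.
Qed.

Lemma root1_power_sum_N N : (0 < N)%nat -> root1_power_sum N N = RtoC (INR N).
Proof.
  intros H. unfold root1_power_sum. rewrite root1_pow_N by auto.
  rewrite (csum_ext _ (fun _ => RtoC 1)). rewrite csum_const. ring.
  intros. apply Cpow_1_l.
Qed.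

Lemma root1_power_sum_eq0 N j : (0 < j mod N)%nat -> root1_power_sum N j = RtoC 0.
Proof.
  intros H. destruct N as [|N']. reflexivity.
  assert (HN : (0 < S N')%nat) by lia. set (N := S N') in *.
  unfold root1_power_sum. apply csum_geom_root_eq0.
  - rewrite (Nat.div_mod j N) by lia. rewrite Cpow_add_r, Cpow_mult_r, root1_pow_N by auto.
    rewrite Cpow_1_l, Cmult_1_l. apply root1_pow_neq1. split; auto. apply Nat.mod_upper_bound; lia.
  - rewrite <- Cpow_mult_r, Nat.mul_comm, Cpow_mult_r, root1_pow_N by auto. apply Cpow_1_l.
Qed.

Lemma finite_uniform_cvg (F : nat -> nat -> C) (L : nat -> C) K :
  (forall k, (k < K)%nat -> forall eps, 0 < eps -> exists m0, forall m, (m0 <= m)%nat -> Cmod (F k m - L k)%C < eps) ->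
  forall eps, 0 < eps -> exists m0, forall m, (m0 <= m)%nat -> forall k, (k < K)%nat -> Cmod (F k m - L k)%C < eps.
Proof.
  induction K; intros H eps He.
  - exists O. intros; exfalso; lia.
  - destruct (IHK ltac:(intros k0 Hk0; apply H; lia) eps He) as [m1 Hm1].
    destruct (H K ltac:(lia) eps He) as [m2 Hm2].
    exists (max m1 m2). intros m Hm k Hk.
    destruct (Nat.eq_dec k K). subst; apply Hm2; lia. apply Hm1; lia.
Qed.

Definition root1_filter_coef (d : nat -> C) (r : R) (N n : nat) : C :=
  (d n * RtoC r ^ n * root1_power_sum N (n + (N - 2)))%C.

(* Weighting the values on the circle of radius [r] by [w^((N-2)k)] and summing over the
   [N]-th roots of unity [w^k] keeps only the series terms of index [n = 2 mod N]. *)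
Lemma root1_filter_psum d r N m :
  csum (fun k => psum d (RtoC r * root1 N ^ k) m * (root1 N ^ (N - 2)) ^ k)%C N
  = csum (root1_filter_coef d r N) (S m).
Proof.
  rewrite (csum_ext _ (fun k => csum (fun n => d n * (RtoC r * root1 N ^ k) ^ n
                                               * (root1 N ^ (N - 2)) ^ k)%C (S m))).
  2:{ intros k _. rewrite psum_as_csum, csum_mul_r. reflexivity. }
  rewrite csum_exchange. apply csum_ext. intros n _. unfold root1_filter_coef, root1_power_sum.
  rewrite csum_mul_l. apply csum_ext. intros k _.
  assert (E1 : ((root1 N ^ k) ^ n)%C = ((root1 N ^ n) ^ k)%C).
  { rewrite <- !Cpow_mult_r. rewrite Nat.mul_comm. reflexivity. }
  rewrite Cpow_add_r, !Cpow_mult_l, E1. ring.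
Qed.

Lemma root1_filter_coef_low d r N : (3 <= N)%nat ->
  csum (root1_filter_coef d r N) (N + 2) = (RtoC (INR N) * d 2%nat * RtoC r ^ 2)%C.
Proof.
  intros HN.
  assert (Ha : forall n, (n <= N + 1)%nat -> root1_filter_coef d r N n =
      if Nat.eqb n 2 then (RtoC (INR N) * d 2%nat * RtoC r ^ 2)%C else RtoC 0).
  { intros n Hn. unfold root1_filter_coef. destruct (Nat.eqb_spec n 2).
    - subst. replace (2 + (N - 2))%nat with N by lia. rewrite root1_power_sum_N by lia. ring.
    - rewrite root1_power_sum_eq0; [ring|].
      destruct (Compare_dec.le_lt_dec n 1).
      + rewrite Nat.mod_small by lia. lia.
      + replace (n + (N - 2))%nat with ((n - 2) + 1 * N)%nat by lia.
        rewrite Nat.Div0.mod_add, Nat.mod_small by lia. lia. }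
  assert (G : forall n, (n <= N + 2)%nat -> csum (root1_filter_coef d r N) n =
      if Nat.leb 3 n then (RtoC (INR N) * d 2%nat * RtoC r ^ 2)%C else RtoC 0).
  { induction n; intros Hn; [reflexivity|].
    cbn [csum]. rewrite IHn, Ha by lia.
    destruct n as [|[|[|n]]]; simpl; ring. }
  rewrite G by lia. replace (Nat.leb 3 (N + 2)) with true; [reflexivity|].
  symmetry; apply Nat.leb_le; lia.
Qed.

Lemma Cmod_root1_filter_coef_le d r N M R0 n : 0 < R0 -> 0 <= r ->
  (forall n, Cmod (d n) * R0 ^ n <= M) ->
  Cmod (root1_filter_coef d r N n) <= INR N * M * (r / R0) ^ n.
Proof.
  intros HR Hr Hc. unfold root1_filter_coef. rewrite Cmod_mult.
  pose proof (ps_term_le_geom d (RtoC r) M R0 n HR Hc) as Ht.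
  rewrite Cmod_RtoC_nonneg in Ht by lra.
  pose proof (Cmod_root1_power_sum_le N (n + (N - 2))).
  replace (INR N * M * (r / R0) ^ n) with ((M * (r / R0) ^ n) * INR N) by ring.
  apply Rmult_le_compat; auto; apply Cmod_ge_0.
Qed.

Lemma root1_filter_cvg (u : C -> C) d r N :
  (forall z, inU z -> ps_sum d z (u z)) -> 0 <= r < 1 -> (0 < N)%nat ->
  forall eps, 0 < eps -> exists m0, forall m, (m0 <= m)%nat ->
  Cmod (csum (fun k => psum d (RtoC r * root1 N ^ k) m * (root1 N ^ (N - 2)) ^ k)%C N
        - csum (fun k => u (RtoC r * root1 N ^ k) * (root1 N ^ (N - 2)) ^ k)%C N)%C < eps.
Proof.
  intros Hs Hr HN eps He.
  set (z := fun k => (RtoC r * root1 N ^ k)%C).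
  assert (Hzin : forall k, inU (z k)).
  { intros k. unfold inU. change (Cmod (z k) < 1). unfold z.
    rewrite Cmod_mult, Cmod_pow, Cmod_root1, pow1, Cmod_RtoC_nonneg; lra. }
  assert (HNp : 0 < INR N) by (apply lt_0_INR; lia).
  destruct (finite_uniform_cvg (fun k m => psum d (z k) m) (fun k => u (z k)) N
    ltac:(intros k _ eps' He'; destruct (Hs (z k) (Hzin k) eps' He') as [m0 Hm0]; exists m0; exact Hm0)
    (eps / (2 * INR N)) ltac:(apply Rdiv_lt_0_compat; lra)) as [m0 Hm0].
  exists m0. intros m Hm. rewrite csum_sub.
  eapply Rle_lt_trans; [apply (Cmod_csum_le _ _ (eps / (2 * INR N)))|].
  - intros k Hk. change (RtoC r * root1 N ^ k)%C with (z k).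
    replace (psum d (z k) m * (root1 N ^ (N - 2)) ^ k - u (z k) * (root1 N ^ (N - 2)) ^ k)%C
      with ((psum d (z k) m - u (z k)) * (root1 N ^ (N - 2)) ^ k)%C by ring.
    rewrite Cmod_mult, !Cmod_pow, Cmod_root1, !pow1, Rmult_1_r. left. apply Hm0; auto.
  - replace (INR N * (eps / (2 * INR N))) with (eps / 2) by (field; lra). lra.
Qed.

Lemma schwarz_coef2_approx (u : C -> C) d r N M :
  (forall z, inU z -> ps_sum d z (u z)) -> (forall z, inU z -> inU (u z)) ->
  0 < r < 1 -> (3 <= N)%nat -> 0 <= M -> (forall n, Cmod (d n) * ((1 + r)/2) ^ n <= M) ->
  Cmod (d 2%nat) * r ^ 2 <= 1 + M * (r / ((1 + r)/2)) ^ (N + 2) / (1 - r / ((1 + r)/2)).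
Proof.
  intros Hs Hu Hr HN HM Hc.
  set (R0 := (1 + r)/2) in *. set (q := r / R0).
  assert (Hq0 : 0 < q) by (unfold q, R0; apply Rdiv_lt_0_compat; lra).
  assert (Hq1 : q < 1) by (unfold q, R0; apply Rmult_lt_reg_r with ((1 + r)/2); [lra|];
    unfold Rdiv; rewrite Rmult_assoc, Rinv_l; lra).
  assert (HNp : 0 < INR N) by (apply lt_0_INR; lia).
  set (W := csum (fun k => u (RtoC r * root1 N ^ k) * (root1 N ^ (N - 2)) ^ k)%C N).
  assert (HW : Cmod W <= INR N).
  { unfold W. rewrite <- (Rmult_1_r (INR N)). apply Cmod_csum_le. intros k _.
    rewrite Cmod_mult, !Cmod_pow, Cmod_root1, !pow1, Rmult_1_r.
    left. apply Hu. unfold inU. change (Cmod (RtoC r * root1 N ^ k)%C < 1).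
    rewrite Cmod_mult, Cmod_pow, Cmod_root1, pow1, Cmod_RtoC_nonneg; lra. }
  set (B := INR N * M * q ^ (N + 2) / (1 - q)).
  assert (HL : Cmod (W - RtoC (INR N) * d 2%nat * RtoC r ^ 2)%C <= B).
  { apply (Cmod_lim_sub_le (fun m => csum (fun k => psum d (RtoC r * root1 N ^ k) m
                                                   * (root1 N ^ (N - 2)) ^ k)%C N)).
    - apply root1_filter_cvg; auto; [lra | lia].
    - intros N'. exists (N' + N + 1)%nat. split; [lia|].
      rewrite root1_filter_psum, <- (root1_filter_coef_low d r N HN).
      replace (S (N' + N + 1)) with (N + 2 + N')%nat by lia.
      eapply Rle_trans; [apply (csum_sub_le_geom _ (INR N * M) q); [lra|]|].
      + intros n. apply Cmod_root1_filter_coef_le; unfold R0; auto; lra.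
      + unfold B, Rdiv. apply Rmult_le_compat_r; [left; apply Rinv_0_lt_compat; lra|].
        assert (0 <= q ^ N') by (apply pow_le; lra).
        assert (0 <= INR N * M * q ^ (N + 2))
          by (apply Rmult_le_pos; [apply Rmult_le_pos; lra | apply pow_le; lra]).
        nra. }
  assert (Hm : Cmod (RtoC (INR N) * d 2%nat * RtoC r ^ 2)%C = INR N * (Cmod (d 2%nat) * r ^ 2)).
  { rewrite !Cmod_mult, Cmod_pow, !Cmod_RtoC_nonneg; try apply pos_INR; try lra; ring. }
  pose proof (Cmod_sub_triangle (RtoC (INR N) * d 2%nat * RtoC r ^ 2)%C W (RtoC 0)) as T.
  replace (RtoC (INR N) * d 2%nat * RtoC r ^ 2 - 0)%C with (RtoC (INR N) * d 2%nat * RtoC r ^ 2)%C in T by ring.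
  replace (W - 0)%C with W in T by ring. rewrite Cmod_sub_sym, Hm in T.
  apply Rmult_le_reg_l with (INR N); auto.
  assert (INR N * (1 + M * q ^ (N + 2) / (1 - q)) = INR N + B) by (unfold B; field; lra).
  fold q. lra.
Qed.

Lemma schwarz_coef2_le_circle (u : C -> C) d r :
  (forall z, inU z -> ps_sum d z (u z)) -> (forall z, inU z -> inU (u z)) ->
  0 < r < 1 -> Cmod (d 2%nat) * r ^ 2 <= 1.
Proof.
  intros Hs Hu Hr. destruct (ps_coef_bounded d u ((1 + r)/2) ltac:(lra) Hs) as [M [HM Hc]].
  set (q := r / ((1 + r)/2)).
  assert (Hq0 : 0 < q) by (unfold q; apply Rdiv_lt_0_compat; lra).
  assert (Hq1 : q < 1) by (unfold q; apply Rmult_lt_reg_r with ((1+r)/2); [lra|]; unfold Rdiv; rewrite Rmult_assoc, Rinv_l; lra).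
  apply Rle_plus_epsilon. intros e He.
  destruct (pow_lt_1_zero q ltac:(rewrite Rabs_pos_eq; lra) (e * (1 - q) / (M + 1))
     ltac:(apply Rdiv_lt_0_compat; [apply Rmult_lt_0_compat|]; lra)) as [N0 HN0].
  pose proof (schwarz_coef2_approx u d r (N0 + 3) M Hs Hu Hr ltac:(lia) HM Hc) as S. fold q in S.
  specialize (HN0 (N0 + 3 + 2)%nat ltac:(lia)). rewrite Rabs_pos_eq in HN0 by (apply pow_le; lra).
  assert (M * q ^ (N0 + 3 + 2) / (1 - q) <= e).
  { apply Rmult_le_reg_r with (1 - q); [lra|]. unfold Rdiv. rewrite Rmult_assoc, Rinv_l by lra.
    assert (M * q ^ (N0 + 3 + 2) <= M * (e * (1 - q) / (M + 1))) by (apply Rmult_le_compat_l; lra).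
    assert (M * (e * (1 - q) / (M + 1)) <= e * (1 - q)).
    { unfold Rdiv. replace (M * (e * (1 - q) * / (M + 1))) with ((e * (1 - q)) * (M / (M + 1))) by (field; lra).
      assert (M / (M + 1) <= 1) by (apply Rmult_le_reg_r with (M + 1); [lra|]; unfold Rdiv; rewrite Rmult_assoc, Rinv_l; lra).
      assert (0 <= e * (1 - q)) by nra. nra. }
    lra. }
  lra.
Qed.

Lemma schwarz_coef2_le1 (u : C -> C) d :
  (forall z, inU z -> ps_sum d z (u z)) -> (forall z, inU z -> inU (u z)) ->
  Cmod (d 2%nat) <= 1.
Proof.
  intros Hs Hu. apply Rle_plus_epsilon. intros e He.
  set (e' := Rmin (e/3) 1).
  assert (He' : 0 < e') by (apply Rmin_pos; lra).
  assert (He1 : e' <= e/3) by apply Rmin_l. assert (He2 : e' <= 1) by apply Rmin_r.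
  pose proof (schwarz_coef2_le_circle u d (1 / (1 + e')) Hs Hu) as Step.
  specialize (Step ltac:(split; [apply Rdiv_lt_0_compat; lra|]; apply Rmult_lt_reg_r with (1 + e'); [lra|]; unfold Rdiv; rewrite Rmult_assoc, Rinv_l; lra)).
  replace ((1 / (1 + e')) ^ 2) with (/ (1 + e') ^ 2) in Step by (field; lra).
  assert (Cmod (d 2%nat) <= (1 + e') ^ 2).
  { apply Rmult_le_reg_r with (/ (1 + e') ^ 2); [apply Rinv_0_lt_compat, pow_lt; lra|].
    rewrite Rinv_r by (apply pow_nonzero; lra). lra. }
  nra.
Qed.

(** * Coefficient relations *)

Lemma bigO3_taylor2_unique (F : R -> C) p0 p1 p2 q1 q2 :
  bigO 3 (fun t => F t - (p0 + p1 * RtoC t + p2 * RtoC t ^ 2))%C ->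
  bigO 3 (fun t => F t - (p0 + q1 * RtoC t + q2 * RtoC t ^ 2))%C ->
  p1 = q1 /\ p2 = q2.
Proof.
  intros HP HQ.
  destruct (poly2_eq0_of_bigO3 (q1 - p1) (q2 - p2)) as [E1 E2].
  { apply (bigO_ext 3 (fun t => (F t - (p0 + p1 * RtoC t + p2 * RtoC t ^ 2))
                               - (F t - (p0 + q1 * RtoC t + q2 * RtoC t ^ 2)))%C).
    - apply bigO_sub; auto.
    - intros; ring. }
  split; change_eq_C.
  - replace q1 with (p1 + (q1 - p1))%C by ring. rewrite E1. ring.
  - replace q2 with (p2 + (q2 - p2))%C by ring. rewrite E2. ring.
Qed.

Lemma strongly_starlike_coefs beta h c : 0 < beta <= 1 -> c O = RtoC 0 -> c 1%nat = RtoC 1 ->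
  (forall z, inU z -> ps_sum c z (h z)) -> strongly_starlike_cond beta h ->
  exists d1 d2, Cmod d2 <= 1 /\ c 2%nat = (RtoC (2 * beta) * d1)%C /\
    (RtoC 2 * c 3%nat - c 2%nat ^ 2)%C = (RtoC (2 * beta) * d2 + RtoC (2 * beta ^ 2) * d1 ^ 2)%C.
Proof.
  intros Hb H0 H1 Hs [hd [Hd [w [[d Hw] [Hw0 [HwU Hsub]]]]]].
  assert (Hd0 : d O = RtoC 0).
  { rewrite <- (ps_sum_at0 d (w (RtoC 0))); [exact Hw0|].
    apply Hw. unfold inU. change (Cmod (RtoC 0) < 1). rewrite Cmod_0. lra. }
  assert (W3 : bigO 3 (fun t => w (RtoC t) - (d 1%nat * RtoC t + d 2%nat * RtoC t ^ 2))%C).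
  { apply (bigO_ext 3 (fun t => w (RtoC t) - psum d (RtoC t) 2)%C).
    - exact (ps_remainder_bigO d w 2 _ Hw bigO_RtoC).
    - intros t _. rewrite psum_2, Hd0. ring. }
  exists (d 1%nat), (d 2%nat). split; [exact (schwarz_coef2_le1 w d Hw HwU)|].
  apply (bigO3_taylor2_unique (fun t => starlike_quot h hd (RtoC t)) 1).
  - exact (starlike_quot_rem2 c h hd H0 H1 Hs Hd).
  - apply (bigO_eventually_ext 3 _ _ (strong_fun_comp_rem2 beta _ _ _ Hb W3)).
    exists (1/2). split; [lra|]. intros t Ht. rewrite Hsub; [reflexivity|].
    unfold inU. change (Cmod (RtoC t) < 1). rewrite Cmod_RtoC_nonneg; lra.
Qed.

Lemma ps_comp_rem3 (f : C -> C) a (G : R -> C) b1 b2 b3 :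
  a O = RtoC 0 -> a 1%nat = RtoC 1 -> (forall z, inU z -> ps_sum a z (f z)) ->
  bigO 4 (fun t => G t - (b1 * RtoC t + b2 * RtoC t ^ 2 + b3 * RtoC t ^ 3))%C ->
  bigO 4 (fun t => f (G t) - (b1 * RtoC t + (b2 + a 2%nat * b1 ^ 2) * RtoC t ^ 2
                  + (b3 + RtoC 2 * a 2%nat * b1 * b2 + a 3%nat * b1 ^ 3) * RtoC t ^ 3))%C.
Proof.
  intros Ha0 Ha1 Hf G4.
  set (P := fun t => (b1 * RtoC t + b2 * RtoC t ^ 2 + b3 * RtoC t ^ 3)%C) in *.
  assert (HP2 : bigO 2 (fun t => P t - b1 * RtoC t)%C).
  { apply (bigO_ext 2 (fun t => b2 * RtoC t ^ 2 + b3 * RtoC t ^ 3)%C).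
    - apply bigO_add; apply bigO_monomial; auto.
    - intros; unfold P; ring. }
  assert (HP1 : bigO 1 P).
  { apply (bigO_ext 1 (fun t => (P t - b1 * RtoC t) + b1 * RtoC t ^ 1)%C).
    - apply bigO_add; [apply (bigO_weaken 1 2); auto | apply bigO_monomial; auto].
    - intros; ring. }
  assert (HP0 : bigO 0 P) by (apply (bigO_weaken 0 1); auto).
  assert (HG1 : bigO 1 G).
  { apply (bigO_ext 1 (fun t => (G t - P t) + P t)%C).
    - apply bigO_add; auto. apply (bigO_weaken 1 4); auto.
    - intros; ring. }
  assert (HG0 : bigO 0 G) by (apply (bigO_weaken 0 1); auto).
  pose proof (ps_remainder_bigO a f 3 G Hf HG1) as F4.
  apply (bigO_ext 4 (fun t =>
      (f (G t) - psum a (G t) 3)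
      + (G t - P t) * (1 + a 2%nat * (G t + P t) + a 3%nat * (G t ^ 2 + G t * P t + P t ^ 2))
      + a 2%nat * (RtoC 2 * b1 * b3 * RtoC t ^ 4 + (P t - b1 * RtoC t) * (P t - b1 * RtoC t))
      + a 3%nat * ((P t - b1 * RtoC t) * (P t ^ 2 + P t * (b1 * RtoC t) + (b1 * RtoC t) ^ 2)))%C).
  2:{ intros t _. rewrite psum_3, Ha0, Ha1. unfold P. ring. }
  apply bigO_add; [apply bigO_add; [apply bigO_add; auto|]|].
  - replace 4%nat with (4 + 0)%nat by reflexivity. apply bigO_mul; auto.
    apply bigO_add; [apply bigO_add; [apply bigO_const|]|].
    + replace 0%nat with (0 + 0)%nat by reflexivity.
      apply bigO_mul; [apply bigO_const | apply bigO_add; auto].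
    + replace 0%nat with (0 + 0)%nat by reflexivity. apply bigO_mul; [apply bigO_const|].
      apply bigO_add; [apply bigO_add|].
      * apply (bigO_sqr 0 G); auto.
      * replace 0%nat with (0 + 0)%nat by reflexivity. apply bigO_mul; auto.
      * apply (bigO_sqr 0 P); auto.
  - replace 4%nat with (0 + 4)%nat by reflexivity. apply bigO_mul; [apply bigO_const|].
    apply bigO_add; [apply bigO_monomial; auto|].
    replace 4%nat with (2 + 2)%nat by reflexivity. apply bigO_mul; auto.
  - replace 4%nat with (0 + (2 + 2))%nat by reflexivity. apply bigO_mul; [apply bigO_const|].
    apply bigO_mul; auto.
    apply bigO_add; [apply bigO_add|].
    + apply (bigO_sqr 1 P); auto.
    + replace 2%nat with (1 + 1)%nat by reflexivity. apply bigO_mul; auto.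
      apply (bigO_ext 1 (fun t => b1 * RtoC t ^ 1)%C); [apply bigO_monomial; auto | intros; ring].
    + apply (bigO_ext 2 (fun t => b1 ^ 2 * RtoC t ^ 2)%C); [apply bigO_monomial; auto | intros; ring].
Qed.

Lemma inverse_series_coefs (f g : C -> C) a b r : a O = RtoC 0 -> a 1%nat = RtoC 1 -> b O = RtoC 0 ->
  (forall z, inU z -> ps_sum a z (f z)) -> (forall z, inU z -> ps_sum b z (g z)) ->
  0 < r -> (forall w, Cmod w < r -> f (g w) = w) ->
  b 1%nat = RtoC 1 /\ b 2%nat = (- a 2%nat)%C /\ b 3%nat = (RtoC 2 * a 2%nat ^ 2 - a 3%nat)%C.
Proof.
  intros Ha0 Ha1 Hb0 Hf Hg Hr Hinv.
  assert (G4 : bigO 4 (fun t => g (RtoC t) - (b 1%nat * RtoC t + b 2%nat * RtoC t ^ 2 + b 3%nat * RtoC t ^ 3))%C).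
  { apply (bigO_ext 4 (fun t => g (RtoC t) - psum b (RtoC t) 3)%C).
    - exact (ps_remainder_bigO b g 3 _ Hg bigO_RtoC).
    - intros t _. rewrite psum_3, Hb0. ring. }
  destruct (poly3_eq0_of_bigO4 (RtoC 1 - b 1%nat) (- (b 2%nat + a 2%nat * b 1%nat ^ 2))
    (- (b 3%nat + RtoC 2 * a 2%nat * b 1%nat * b 2%nat + a 3%nat * b 1%nat ^ 3))) as [E1 [E2 E3]].
  { apply (bigO_eventually_ext 4 _ _ (ps_comp_rem3 f a _ _ _ _ Ha0 Ha1 Hf G4)).
    exists (r/2). split; [lra|]. intros t Ht.
    rewrite (Hinv (RtoC t)) by (rewrite Cmod_RtoC_nonneg; lra). ring. }
  assert (B1 : b 1%nat = RtoC 1).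
  { change_eq_C. replace (b 1%nat) with (RtoC 1 - (RtoC 1 - b 1%nat))%C by ring. rewrite E1. ring. }
  assert (B2 : b 2%nat = (- a 2%nat)%C).
  { change_eq_C. replace (b 2%nat) with (- (- (b 2%nat + a 2%nat * b 1%nat ^ 2)) - a 2%nat * b 1%nat ^ 2)%C by ring.
    rewrite E2, B1. ring. }
  split; [exact B1 | split; [exact B2|]].
  change_eq_C. replace (b 3%nat) with (- (- (b 3%nat + RtoC 2 * a 2%nat * b 1%nat * b 2%nat + a 3%nat * b 1%nat ^ 3))
     - (RtoC 2 * a 2%nat * b 1%nat * b 2%nat + a 3%nat * b 1%nat ^ 3))%C by ring.
  rewrite E3, B1, B2. ring.
Qed.

Lemma inverse_series_coef0 (f g : C -> C) a b :
  a O = RtoC 0 -> (forall z, inU z -> ps_sum a z (f z)) -> univalent_U f ->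
  (forall z, inU z -> ps_sum b z (g z)) ->
  (exists r, 0 < r /\ forall w, Cmod w < r -> inU (g w) /\ f (g w) = w) ->
  b O = RtoC 0.
Proof.
  intros Ha0 Hf Funiv Hg [r [Hr Hinv]].
  assert (In0 : inU (RtoC 0)) by (unfold inU; change (Cmod (RtoC 0) < 1); rewrite Cmod_0; lra).
  assert (f0 : f (RtoC 0) = RtoC 0) by (rewrite (ps_sum_at0 a (f (RtoC 0))) by auto; exact Ha0).
  destruct (Hinv (RtoC 0)) as [Hin Hfg]; [rewrite Cmod_0; lra|].
  rewrite <- (ps_sum_at0 b (g (RtoC 0))) by auto.
  apply Funiv; auto. rewrite Hfg, f0. reflexivity.
Qed.

Lemma fekete_szego_of_coef_relations beta (a2 a3 u1 u2 v1 v2 : C) : 0 < beta ->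
  Cmod u2 <= 1 -> Cmod v2 <= 1 ->
  a2 = (RtoC (2 * beta) * u1)%C ->
  (RtoC 2 * a3 - a2 ^ 2)%C = (RtoC (2 * beta) * u2 + RtoC (2 * beta ^ 2) * u1 ^ 2)%C ->
  (- a2)%C = (RtoC (2 * beta) * v1)%C ->
  (RtoC 2 * (RtoC 2 * a2 ^ 2 - a3) - (- a2) ^ 2)%C
    = (RtoC (2 * beta) * v2 + RtoC (2 * beta ^ 2) * v1 ^ 2)%C ->
  Cmod (a3 - a2 ^ 2)%C <= beta.
Proof.
  intros Hb Hu2 Hv2 E1 E2 F1 F2.
  assert (Hbz : RtoC (2 * beta) <> RtoC 0) by (apply RtoC_neq0; lra).
  assert (V1 : v1 = (- u1)%C).
  { change_eq_C. replace v1 with (/ RtoC (2 * beta) * (RtoC (2 * beta) * v1))%C by (field; auto).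
    rewrite <- F1, E1. field; auto. }
  subst v1.
  assert (K : (RtoC 4 * (a3 - a2 ^ 2))%C = (RtoC (2 * beta) * (u2 - v2))%C).
  { replace (RtoC 4) with (RtoC 2 * RtoC 2)%C by (rewrite <- RtoC_mult; f_equal; ring).
    replace (RtoC 2 * RtoC 2 * (a3 - a2 ^ 2))%C with
      ((RtoC 2 * a3 - a2 ^ 2) - (RtoC 2 * (RtoC 2 * a2 ^ 2 - a3) - (- a2) ^ 2))%C by ring.
    rewrite E2, F2. ring. }
  apply (f_equal Cmod) in K. rewrite !Cmod_mult, !Cmod_RtoC_nonneg in K by lra.
  assert (Cmod (u2 - v2)%C <= 2) by (eapply Rle_trans; [apply Cmod_sub_le|lra]).
  nra.
Qed.

Theorem corollary3p13 (beta : R) (f : Cplx -> Cplx) (a : nat -> Cplx)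
  (hb0 : 0 < beta) (hb1 : beta <= 1)
  (hf : strongly_bistarlike beta f a) :
  Cnorm (Csub (a 3%nat) (Cpow (a 2%nat) 2)) <= beta.
Proof.
  destruct hf as [Ha0 [Ha1 [Hf [Funiv [g [[b Hg] [_ [Hinv [Sf Sg]]]]]]]]].
  assert (Hb : 0 < beta <= 1) by lra.
  assert (Hb0 : b O = RtoC 0) by exact (inverse_series_coef0 f g a b Ha0 Hf Funiv Hg Hinv).
  destruct Hinv as [r [Hr Hinv]].
  destruct (inverse_series_coefs f g a b r Ha0 Ha1 Hb0 Hf Hg Hr) as [B1 [B2 B3]].
  { intros w Hw. apply Hinv, Hw. }
  destruct (strongly_starlike_coefs beta f a Hb Ha0 Ha1 Hf Sf) as [u1 [u2 [Hu2 [E1 E2]]]].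
  destruct (strongly_starlike_coefs beta g b Hb Hb0 B1 Hg Sg) as [v1 [v2 [Hv2 [F1 F2]]]].
  rewrite B2 in F1. rewrite B2, B3 in F2.
  exact (fekete_szego_of_coef_relations beta _ _ u1 u2 v1 v2 hb0 Hu2 Hv2 E1 E2 F1 F2).
Qed.
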